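(* Let $f$ satisfy (f1) and suppose $f_0=+\infty$ and $f_\infty=0$. Then for every $\lambda\in(0,+\infty)$, problem (MO) has two solutions $u^+$ and $u^-$ such that $u^+$ is positive and strictly concave in $(0,1)$ and $u^-$ is negative and strictly convex in $(0,1)$.
   Context: Let $N\ge 1$ be an integer and $f:\mathbb{R}\to\mathbb{R}$ continuous. For $\lambda\ge 0$, problem (MO) is: find $u\in C^2[0,1]$ with $\left((u'(r))^N\right)'=\lambda^N N r^{N-1} f(-u(r))$ for $0<r<1$ and $u'(0)=u(1)=0$. Condition (f1): $f\in C(\mathbb{R},\mathbb{R})$ and $f(s)s^N>0$ for all $s\neq0$. The quantities $f_0,f_\infty\in[0,+\infty]$ are defined by $f_0^N=\lim_{s\to0} f(s)/s^N$ and $f_\infty^N=\lim_{|s|\to+\infty} f(s)/s^N$ (limits assumed to exist in $[0,+\infty]$). *)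

From Stdlib Require Import Reals Lra.
Open Scope R_scope.

Definition cond_f1 (N : nat) (f : R -> R) : Prop :=
  continuity f /\ (forall s : R, s <> 0 -> f s * s ^ N > 0).

Definition f0_infinite (N : nat) (f : R -> R) : Prop :=
  forall M : R, exists d : R, d > 0 /\
    forall s : R, s <> 0 -> Rabs s < d -> f s / s ^ N > M.

Definition finf_zero (N : nat) (f : R -> R) : Prop :=
  forall eps : R, eps > 0 -> exists K : R,
    forall s : R, Rabs s > K -> Rabs (f s / s ^ N) < eps.

Definition C2_on01 (u u1 u2 : R -> R) : Prop :=
  (forall r, 0 <= r <= 1 -> derivable_pt_lim u r (u1 r)) /\
  (forall r, 0 <= r <= 1 -> derivable_pt_lim u1 r (u2 r)) /\
  (forall r, 0 <= r <= 1 -> forall eps, eps > 0 -> exists d, d > 0 /\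
     forall s, 0 <= s <= 1 -> Rabs (s - r) < d -> Rabs (u2 s - u2 r) < eps).

Definition solves_MO (N : nat) (f : R -> R) (lam : R) (u : R -> R) : Prop :=
  exists u1 u2 : R -> R,
    C2_on01 u u1 u2 /\
    (forall r, 0 < r < 1 ->
       derivable_pt_lim (fun s => (u1 s) ^ N) r
         (lam ^ N * INR N * r ^ (N - 1) * f (- u r))) /\
    u1 0 = 0 /\ u 1 = 0.

Definition strictly_concave_01 (u : R -> R) : Prop :=
  forall x y t, 0 < x < 1 -> 0 < y < 1 -> x <> y -> 0 < t < 1 ->
    u (t * x + (1 - t) * y) > t * u x + (1 - t) * u y.

Definition strictly_convex_01 (u : R -> R) : Prop :=
  forall x y t, 0 < x < 1 -> 0 < y < 1 -> x <> y -> 0 < t < 1 ->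
    u (t * x + (1 - t) * y) < t * u x + (1 - t) * u y.

From Stdlib Require Import Reals Lra Lia Ranalysis5 ClassicalEpsilon.
From Coquelicot Require Import Coquelicot.
Open Scope R_scope.

(* Write
   N = m + 1 and let q > 0 be a continuous nonlinearity on (0,+oo) (q(x) =
   (-1)^N f(-x) for the positive solution, q = f for minus the negative one).
   We seek v > 0 with v'(0) = v(1) = 0 and ((-v')^N)' = lam^N N r^(N-1) q(v)
   in the form v(r) = a (1 - e(r)^2), where e is the inverse of
   rho(y) = y exp(psi(y)).  The equation holds as soon as
       exp(psi(eta)) = 2a int_0^1 W(eta t)^(-1/(N+1)) dt,
       W(eta) = 2a (N+1) lam^N int_0^1 t^N exp((N-1) psi(eta t)) q(a(1 - eta^2 t^2)) dt,
   i.e. psi is a fixed point of an operator T_a which contracts the sup-norm on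
   [-2,2] by (N-1)/(N+1).  A Banach fixed point theorem for continuous functions
   gives psi_a, continuous in a.  Then -v' = e W(e)^(1/(N+1)) and a key identity
   turns the fixed point equation into the ODE.  Comparing -v' with multiples of
   rho shows rho_a(1) < 1 for small a (q(x)/x^N -> +oo at 0) and rho_a(1) > 1 for
   large a (q(x)/x^N -> 0 at +oo); the intermediate value theorem gives a with
   rho_a(1) = 1, i.e. v(1) = 0.  The file develops: elementary analysis and
   parameter integrals; the fixed point theorem; the operator T_a and its
   dependence on a; calculus along the fixed point; the size estimates and the
   shooting argument; the inverse of rho and the solution; finally the theorem. *)

Lemma continuity_pt_eps (f : R -> R) x0 :
  continuity_pt f x0 <->
  forall eps, eps > 0 -> exists d, d > 0 /\
    forall x, Rabs (x - x0) < d -> Rabs (f x - f x0) < eps.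
Proof.
  split; intros H eps Heps; destruct (H eps Heps) as [d [Hd Hx]];
    exists d; split; try lra.
  - intros x Hx1. destruct (Req_dec x0 x) as [<-|Hne].
    + rewrite Rminus_eq_0, Rabs_R0; lra.
    + apply (Hx x). split; [split; [exact I|auto]|exact Hx1].
  - intros x [_ Hx1]. apply Hx. exact Hx1.
Qed.

Lemma continuity_pt_nonexpansive_comp (h g : R -> R) x0 :
  (forall a b, Rabs (h a - h b) <= Rabs (a - b)) -> continuity_pt g x0 ->
  continuity_pt (fun x => h (g x)) x0.
Proof.
  intros Hh Hg. apply continuity_pt_eps. intros eps Heps.
  destruct (proj1 (continuity_pt_eps g x0) Hg eps Heps) as [d [Hd H]].
  exists d; split; auto. intros x Hx.
  eapply Rle_lt_trans; [apply Hh|]. apply H; auto.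
Qed.

Lemma pow_continuous n x : continuity_pt (fun t => t ^ n) x.
Proof. apply derivable_continuous_pt, derivable_pt_pow. Qed.

Lemma exp_continuous x : continuity_pt exp x.
Proof. apply derivable_continuous_pt, derivable_pt_exp. Qed.

Lemma ln_continuous x : 0 < x -> continuity_pt ln x.
Proof.
  intros Hx. apply derivable_continuous_pt. exists (/ x). apply derivable_pt_lim_ln; auto.
Qed.

Lemma exp_le_exp x y : x <= y -> exp x <= exp y.
Proof. intros [H|<-]; [left; apply exp_increasing; auto | lra]. Qed.

Lemma exp_pow_INR x k : exp x ^ k = exp (INR k * x).
Proof.
  induction k; simpl; [rewrite Rmult_0_l, exp_0; auto|].
  rewrite IHk, <- exp_plus. f_equal. destruct k; simpl; ring.
Qed.

Lemma pow_le_1 n t : 0 <= t <= 1 -> Rabs (t ^ n) <= 1.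
Proof.
  intros Ht. rewrite Rabs_right by (apply Rle_ge, pow_le; lra).
  rewrite <- (pow1 n). apply pow_incr; lra.
Qed.

Lemma pow_le_inv x y m : 0 <= x -> 0 <= y -> x ^ S m <= y ^ S m -> x <= y.
Proof.
  intros Hx Hy H. apply Rnot_lt_le. intros Hlt.
  assert (Hs : forall k, y ^ S k < x ^ S k).
  { induction k; [simpl; lra|].
    change (y * y ^ S k < x * x ^ S k). assert (0 <= y ^ S k) by (apply pow_le; lra). nra. }
  specialize (Hs m). lra.
Qed.

Lemma is_derive_eq (f : R -> R) (x a b : R) : is_derive f x a -> a = b -> is_derive f x b.
Proof. intros H ->; auto. Qed.

Lemma is_derive_Rmult (f g : R -> R) (x a b : R) : is_derive f x a -> is_derive g x b ->
  is_derive (fun t => f t * g t) x (a * g x + f x * b).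
Proof. intros H1 H2. apply (is_derive_mult f g x a b H1 H2). intros; apply Rmult_comm. Qed.

Lemma is_derive_Rminus (f g : R -> R) (x a b : R) : is_derive f x a -> is_derive g x b ->
  is_derive (fun t => f t - g t) x (a - b).
Proof. intros H1 H2. exact (is_derive_minus f g x a b H1 H2). Qed.

(* Projection of R onto [-2,2]; the fixed point problem only looks at [-2,2]. *)
Definition clamp (x : R) : R := Rmax (-2) (Rmin 2 x).

Lemma clamp_id x : -2 <= x <= 2 -> clamp x = x.
Proof. intros H. unfold clamp, Rmax, Rmin. repeat destruct Rle_dec; lra. Qed.

Lemma clamp_range x : -2 <= clamp x <= 2.
Proof. unfold clamp, Rmax, Rmin. repeat destruct Rle_dec; lra. Qed.

Lemma clamp_continuous x : continuity_pt clamp x.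
Proof.
  apply (continuity_pt_nonexpansive_comp clamp (fun y => y)); [|apply continuity_pt_id].
  intros a b. unfold clamp, Rmax, Rmin.
  repeat destruct Rle_dec; unfold Rabs; repeat destruct Rcase_abs; lra.
Qed.

Lemma MVT_open (f df : R -> R) a b : a < b ->
  (forall x, a <= x <= b -> continuity_pt f x) ->
  (forall x, a < x < b -> is_derive f x (df x)) ->
  exists c, a < c < b /\ f b - f a = df c * (b - a).
Proof.
  intros Hab Hc Hd.
  set (pr1 := fun c (P : a < c < b) => exist (fun l => derivable_pt_lim f c l) (df c)
                 (proj1 (is_derive_Reals f c (df c)) (Hd c P))).
  set (pr2 := fun c (P : a < c < b) => derivable_pt_id c).
  destruct (MVT f id a b pr1 pr2 Hab Hc (fun c _ => continuity_pt_id c)) as [c [P E]].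
  exists c. split; auto. unfold pr1, pr2 in E. simpl in E. rewrite derive_pt_id in E.
  unfold id in E. lra.
Qed.

Lemma nondecreasing_of_deriv (f df : R -> R) a b : a < b ->
  (forall x, a <= x <= b -> continuity_pt f x) ->
  (forall x, a < x < b -> is_derive f x (df x)) ->
  (forall x, a < x < b -> 0 <= df x) -> f a <= f b.
Proof.
  intros Hab Hc Hd Hp. destruct (MVT_open f df a b Hab Hc Hd) as [c [Hc1 E]].
  specialize (Hp c Hc1). nra.
Qed.

Lemma increasing_of_deriv (f df : R -> R) a b : a < b ->
  (forall x, a <= x <= b -> continuity_pt f x) ->
  (forall x, a < x < b -> is_derive f x (df x)) ->
  (forall x, a < x < b -> 0 < df x) -> f a < f b.
Proof.
  intros Hab Hc Hd Hp. destruct (MVT_open f df a b Hab Hc Hd) as [c [Hc1 E]].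
  specialize (Hp c Hc1). nra.
Qed.

Lemma is_derive_from_punctured (f f' : R -> R) x0 d : 0 < d ->
  continuity_pt f x0 ->
  (forall x, 0 < Rabs (x - x0) < d -> is_derive f x (f' x)) ->
  continuity_pt f' x0 -> is_derive f x0 (f' x0).
Proof.
  intros Hd Hc Hder Hc'. apply is_derive_Reals. intros eps Heps.
  destruct (proj1 (continuity_pt_eps f' x0) Hc' (eps/2) ltac:(lra)) as [d1 [Hd1 H1]].
  assert (Hm : 0 < Rmin d d1) by (apply Rmin_pos; lra).
  exists (mkposreal _ Hm). intros h Hh0 Hh. simpl in Hh.
  assert (Hhd : Rabs h < d) by (eapply Rlt_le_trans; [exact Hh| apply Rmin_l]).
  assert (Hhd1 : Rabs h < d1) by (eapply Rlt_le_trans; [exact Hh| apply Rmin_r]).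
  assert (Hbetween : forall x, Rmin x0 (x0 + h) <= x <= Rmax x0 (x0 + h) -> x <> x0 ->
                       0 < Rabs (x - x0) < d /\ Rabs (x - x0) < d1).
  { intros x Hx Hne. unfold Rmin, Rmax in Hx.
    assert (Rabs (x - x0) <= Rabs h)
      by (destruct Rle_dec in Hx; unfold Rabs; repeat destruct Rcase_abs; lra).
    split; [split; [apply Rabs_pos_lt; lra|]|]; lra. }
  destruct (MVT_gen f x0 (x0 + h) f') as [c [Hc1 Hc2]].
  - intros x Hx. apply Hder, Hbetween; [split; apply Rlt_le; apply Hx|].
    unfold Rmin, Rmax in Hx. destruct Rle_dec in Hx; lra.
  - intros x Hx. destruct (Req_dec x x0) as [->|Hne]; auto.
    apply continuity_pt_filterlim, (ex_derive_continuous f x). exists (f' x).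
    apply Hder, Hbetween; auto.
  - rewrite Hc2. replace ((f' c * (x0 + h - x0)) / h) with (f' c) by (field; auto).
    apply Rlt_trans with (eps / 2); [|lra].
    destruct (Req_dec c x0) as [->|Hne]; [rewrite Rminus_eq_0, Rabs_R0; lra|].
    apply H1, Hbetween; auto.
Qed.

Lemma strictly_concave_of_C2 v v1 v2 : C2_on01 v v1 v2 ->
  (forall r, 0 < r < 1 -> v2 r < 0) -> strictly_concave_01 v.
Proof.
  intros [D1 [D2 _]] Hneg.
  assert (Hord : forall x y s, 0 < x -> x < y -> y < 1 -> 0 < s < 1 ->
            v (s * x + (1 - s) * y) > s * v x + (1 - s) * v y).
  { intros x y s Hx Hxy Hy Hs. set (z := s * x + (1 - s) * y).
    assert (Hz : x < z < y) by (unfold z; split; nra).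
    assert (Cv : forall t, 0 <= t <= 1 -> continuity_pt v t)
      by (intros t Ht; apply derivable_continuous_pt; exists (v1 t); apply D1; auto).
    assert (Dv : forall t, 0 < t < 1 -> is_derive v t (v1 t))
      by (intros t Ht; apply is_derive_Reals, D1; lra).
    destruct (MVT_open v v1 x z ltac:(lra)) as [c1 [Hc1 E1]];
      [intros; apply Cv; lra | intros; apply Dv; lra |].
    destruct (MVT_open v v1 z y ltac:(lra)) as [c2 [Hc2 E2]];
      [intros; apply Cv; lra | intros; apply Dv; lra |].
    assert (Hdec : - v1 c1 < - v1 c2).
    { apply (increasing_of_deriv (fun t => - v1 t) (fun t => - v2 t)); [lra| | |].
      - intros t Ht. apply continuity_pt_opp, derivable_continuous_pt.
        exists (v2 t). apply D2; lra.
      - intros t Ht. apply (is_derive_opp v1). apply is_derive_Reals, D2. lra.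
      - intros t Ht. pose proof (Hneg t ltac:(lra)). lra. }
    replace (z - x) with ((1 - s) * (y - x)) in E1 by (unfold z; ring).
    replace (y - z) with (s * (y - x)) in E2 by (unfold z; ring).
    assert (0 < s * (1 - s) * (y - x)) by (apply Rmult_lt_0_compat; nra).
    assert (s * (v z - v x) > (1 - s) * (v y - v z)) by (rewrite E1, E2; nra).
    lra. }
  intros x y t Hx Hy Hne Ht. destruct (Rlt_le_dec x y) as [Hl|Hl].
  - apply Hord; lra.
  - replace (t * x + (1 - t) * y) with ((1 - t) * y + (1 - (1 - t)) * x) by ring.
    replace (t * v x + (1 - t) * v y) with ((1 - t) * v y + (1 - (1 - t)) * v x) by ring.
    apply Hord; lra.
Qed.

Lemma ex_RInt_01 (F : R -> R) :
  (forall t, 0 <= t <= 1 -> continuity_pt F t) -> ex_RInt F 0 1.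
Proof.
  intros H. apply (@ex_RInt_continuous R_CompleteNormedModule). intros z Hz.
  rewrite Rmin_left in Hz by lra. rewrite Rmax_right in Hz by lra.
  apply continuity_pt_filterlim, H; auto.
Qed.

Lemma RInt_minus_01 (F G : R -> R) : ex_RInt F 0 1 -> ex_RInt G 0 1 ->
  RInt (fun t => F t - G t) 0 1 = RInt F 0 1 - RInt G 0 1.
Proof. intros HF HG. exact (RInt_minus F G 0 1 HF HG). Qed.

Lemma RInt_scal_01 (F : R -> R) c : ex_RInt F 0 1 ->
  RInt (fun t => c * F t) 0 1 = c * RInt F 0 1.
Proof. intros H. exact (RInt_scal F 0 1 c H). Qed.

Lemma ex_RInt_scal_01 (F : R -> R) c : ex_RInt F 0 1 -> ex_RInt (fun t => c * F t) 0 1.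
Proof. intros H. exact (ex_RInt_scal F 0 1 c H). Qed.

Lemma RInt_le_01 (F G : R -> R) : ex_RInt F 0 1 -> ex_RInt G 0 1 ->
  (forall t, 0 <= t <= 1 -> F t <= G t) -> RInt F 0 1 <= RInt G 0 1.
Proof. intros HF HG H. apply RInt_le; auto; [lra|]. intros; apply H; lra. Qed.

Lemma RInt_abs_le_01 (F : R -> R) M : ex_RInt F 0 1 ->
  (forall t, 0 <= t <= 1 -> Rabs (F t) <= M) -> Rabs (RInt F 0 1) <= M.
Proof.
  intros Hex Hb. replace M with ((1 - 0) * M) by ring.
  apply abs_RInt_le_const; auto. lra.
Qed.

Definition param_int (k H : R -> R) (eta : R) : R := RInt (fun t => k t * H (eta * t)) 0 1.

Lemma param_integrand_continuous (k H : R -> R) eta t :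
  continuity_pt k t -> continuity_pt H (eta * t) ->
  continuity_pt (fun t => k t * H (eta * t)) t.
Proof.
  intros Hk HH. apply continuity_pt_mult; auto.
  apply (continuity_pt_comp (fun t => eta * t) H); auto.
  apply continuity_pt_scal, continuity_pt_id.
Qed.

Lemma ex_RInt_param (k H : R -> R) eta :
  (forall t, continuity_pt k t) -> (forall x, continuity_pt H x) ->
  ex_RInt (fun t => k t * H (eta * t)) 0 1.
Proof. intros Hk HH. apply ex_RInt_01. intros t _. apply param_integrand_continuous; auto. Qed.

(* The parameter integral is continuous in eta (uniform continuity of H on a compact). *)
Lemma param_int_continuous (k H : R -> R) eta0 :
  (forall t, continuity_pt k t) -> (forall t, 0 <= t <= 1 -> Rabs (k t) <= 1) ->
  (forall x, continuity_pt H x) -> continuity_pt (param_int k H) eta0.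
Proof.
  intros Hk Hk1 HH. apply continuity_pt_eps. intros eps Heps.
  set (B := Rabs eta0 + 1).
  destruct (Heine H (fun c => -B <= c <= B) (compact_P3 (-B) B) (fun x _ => HH x)
              (mkposreal (eps/2) ltac:(lra))) as [[del Hdel] Hud]. simpl in Hud.
  exists (Rmin del 1). split; [apply Rmin_pos; lra|].
  intros eta Heta. unfold param_int.
  rewrite <- RInt_minus_01 by (apply ex_RInt_param; auto).
  apply Rle_lt_trans with (eps/2); [|lra].
  apply RInt_abs_le_01.
  { apply ex_RInt_01. intros t _. apply continuity_pt_minus; apply param_integrand_continuous; auto. }
  intros t Ht. rewrite <- Rmult_minus_distr_l, Rabs_mult.
  assert (Hm1 : Rabs (eta - eta0) < del) by (eapply Rlt_le_trans; [apply Heta| apply Rmin_l]).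
  assert (Hm2 : Rabs (eta - eta0) < 1) by (eapply Rlt_le_trans; [apply Heta| apply Rmin_r]).
  assert (Hb1 : Rabs (eta * t) <= B).
  { rewrite Rabs_mult, (Rabs_right t) by lra. unfold B.
    assert (Rabs eta <= Rabs eta0 + 1).
    { replace eta with (eta0 + (eta - eta0)) by ring. eapply Rle_trans; [apply Rabs_triang|lra]. }
    pose proof (Rabs_pos eta). nra. }
  assert (Hb2 : Rabs (eta0 * t) <= B).
  { rewrite Rabs_mult, (Rabs_right t) by lra. unfold B. pose proof (Rabs_pos eta0). nra. }
  assert (Hd : Rabs (eta * t - eta0 * t) < del).
  { replace (eta * t - eta0 * t) with ((eta - eta0) * t) by ring.
    rewrite Rabs_mult, (Rabs_right t) by lra. pose proof (Rabs_pos (eta - eta0)). nra. }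
  assert (Hc : Rabs (H (eta * t) - H (eta0 * t)) < eps/2)
    by (apply Hud; auto; apply Rabs_le_between; auto).
  pose proof (Rabs_pos (k t)). specialize (Hk1 t Ht).
  pose proof (Rabs_pos (H (eta * t) - H (eta0 * t))). nra.
Qed.

Lemma is_derive_RInt_0 (G : R -> R) y : (forall x, continuity_pt G x) ->
  is_derive (fun z => RInt G 0 z) y (G y).
Proof.
  intros HG. apply (is_derive_RInt G (fun z => RInt G 0 z) 0 y).
  - exists (mkposreal 1 Rlt_0_1). intros b _. apply (@RInt_correct R_CompleteNormedModule).
    apply (@ex_RInt_continuous R_CompleteNormedModule). intros; apply continuity_pt_filterlim; auto.
  - apply continuity_pt_filterlim; auto.
Qed.

Lemma RInt_rescale (H : R -> R) y : (forall x, continuity_pt H x) ->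
  y * RInt (fun t => H (y * t)) 0 1 = RInt H 0 y.
Proof.
  intros HH.
  assert (E := RInt_comp_lin H y 0 0 1).
  replace (y * 0 + 0) with 0 in E by ring. replace (y * 1 + 0) with y in E by ring.
  rewrite <- E.
  2:{ apply (@ex_RInt_continuous R_CompleteNormedModule). intros; apply continuity_pt_filterlim; auto. }
  rewrite <- RInt_scal_01.
  - apply RInt_ext. intros x _. rewrite Rplus_0_r. reflexivity.
  - apply ex_RInt_01. intros t _. apply (continuity_pt_comp (fun t => y * t) H); auto.
    apply continuity_pt_scal, continuity_pt_id.
Qed.

Definition contf (p : R -> R) : Prop := forall x, continuity_pt p x.

Definition contraction (T : (R -> R) -> (R -> R)) (al : R) : Prop :=
  forall p1 p2 k, contf p1 -> contf p2 ->
    (forall x, -2 <= x <= 2 -> Rabs (p1 x - p2 x) <= k) ->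
    forall x, Rabs (T p1 x - T p2 x) <= al * k.

Lemma contf_bounded_2 p : contf p -> exists K, forall x, -2 <= x <= 2 -> Rabs (p x) <= K.
Proof.
  intros Hp. destruct (continuity_ab_maj (fun x => Rabs (p x)) (-2) 2) as [M [HM _]]; [lra| |].
  - intros c _. apply (continuity_pt_comp p Rabs); [apply Hp | apply Rcontinuity_abs].
  - exists (Rabs (p M)). exact HM.
Qed.

Lemma pow_small al : 0 <= al < 1 -> forall y, 0 < y -> exists j, al ^ j < y.
Proof.
  intros Hal y Hy. destruct (pow_lt_1_zero al ltac:(rewrite Rabs_right; lra) y Hy) as [j Hj].
  exists j. specialize (Hj j (le_n j)). rewrite Rabs_right in Hj; auto. apply Rle_ge, pow_le; lra.
Qed.

Section Banach.
Variable T : (R -> R) -> (R -> R).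
Variable al : R.
Hypothesis al_range : 0 <= al < 1.
Hypothesis T_contf : forall p, contf p -> contf (T p).
Hypothesis T_contraction : contraction T al.

Fixpoint iterate (j : nat) : R -> R :=
  match j with O => fun _ => 0 | S j => T (iterate j) end.

Lemma iterate_contf j : contf (iterate j).
Proof.
  induction j; simpl; auto. intros x. apply continuity_pt_const. intros u v; auto.
Qed.

Section Iterates.
Variable K : R.
Hypothesis K_bound : forall x, -2 <= x <= 2 -> Rabs (iterate 1 x - iterate 0 x) <= K.

Lemma iterate_step_2 j x : -2 <= x <= 2 ->
  Rabs (iterate (S j) x - iterate j x) <= al ^ j * K.
Proof.
  revert x; induction j as [|j IH]; intros x Hx; simpl pow; [rewrite Rmult_1_l; auto|].
  rewrite Rmult_assoc.
  apply (T_contraction (iterate (S j)) (iterate j)); try apply iterate_contf; auto.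
Qed.

Lemma iterate_step j x : Rabs (iterate (S (S j)) x - iterate (S j) x) <= al ^ S j * K.
Proof.
  simpl pow. rewrite Rmult_assoc.
  apply (T_contraction (iterate (S j)) (iterate j)); try apply iterate_contf.
  intros y Hy. apply iterate_step_2; auto.
Qed.

Definition tail_bound (j : nat) : R := K * al ^ S j / (1 - al).

Lemma tail_bound_nonneg j : 0 <= K -> 0 <= tail_bound j.
Proof.
  intros HK. unfold tail_bound. apply Rmult_le_pos.
  - apply Rmult_le_pos; auto. apply pow_le; lra.
  - left; apply Rinv_0_lt_compat; lra.
Qed.

Lemma iterate_tail j i x : Rabs (iterate (S j + i) x - iterate (S j) x) <= tail_bound j.
Proof.
  assert (0 <= K).
  { eapply Rle_trans; [apply Rabs_pos | apply (K_bound 0); lra]. }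
  assert (Hsum : Rabs (iterate (S j + i) x - iterate (S j) x)
                   <= K * al ^ S j * (1 - al ^ i) / (1 - al)).
  { induction i.
    - rewrite Nat.add_0_r, Rminus_eq_0, Rabs_R0. simpl pow. unfold Rdiv.
      rewrite Rminus_eq_0. lra.
    - rewrite Nat.add_succ_r.
      replace (iterate (S (S j + i)) x - iterate (S j) x) with
        ((iterate (S (S j + i)) x - iterate (S j + i)%nat x)
         + (iterate (S j + i)%nat x - iterate (S j) x)) by ring.
      eapply Rle_trans; [apply Rabs_triang|].
      pose proof (iterate_step (j + i) x) as E.
      replace (al ^ S (j + i)) with (al ^ S j * al ^ i) in E by (rewrite <- pow_add; reflexivity). change (S j + i)%nat with (S (j + i)) in IHi |- *.
      apply Rle_trans with (al ^ S j * al ^ i * K + K * al ^ S j * (1 - al ^ i) / (1 - al));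
        [lra|]. right. simpl pow. field. lra. }
  eapply Rle_trans; [exact Hsum|]. unfold tail_bound, Rdiv.
  apply Rmult_le_compat_r; [left; apply Rinv_0_lt_compat; lra|].
  assert (0 <= al ^ i) by (apply pow_le; lra).
  assert (0 <= K * al ^ S j) by (apply Rmult_le_pos; auto; apply pow_le; lra). nra.
Qed.

Lemma tail_bound_small eps : 0 < eps -> exists j, tail_bound j < eps.
Proof.
  intros Heps.
  assert (0 <= K) by (eapply Rle_trans; [apply Rabs_pos | apply (K_bound 0); lra]).
  destruct (pow_small al al_range (eps * (1 - al) / (K + 1))) as [j Hj].
  { apply Rdiv_lt_0_compat; nra. }
  exists j. unfold tail_bound. simpl pow.
  assert (0 <= al ^ j) by (apply pow_le; lra).
  apply Rle_lt_trans with ((K + 1) * al ^ j / (1 - al)).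
  - unfold Rdiv. apply Rmult_le_compat_r; [left; apply Rinv_0_lt_compat; lra|].
    assert (0 <= K * al ^ j) by (apply Rmult_le_pos; lra). nra.
  - apply Rmult_lt_reg_r with ((1 - al) / (K + 1)); [apply Rdiv_lt_0_compat; lra|].
    replace ((K + 1) * al ^ j / (1 - al) * ((1 - al) / (K + 1))) with (al ^ j) by (field; lra).
    replace (eps * ((1 - al) / (K + 1))) with (eps * (1 - al) / (K + 1)) by (field; lra).
    exact Hj.
Qed.

Lemma iterate_cauchy x : Cauchy_crit (fun j => iterate j x).
Proof.
  intros eps Heps. destruct (tail_bound_small (eps/2) ltac:(lra)) as [j Hj]. exists (S j).
  intros n m Hn Hm. unfold Rdist.
  replace n with (S j + (n - S j))%nat by lia. replace m with (S j + (m - S j))%nat by lia.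
  replace (iterate (S j + (n - S j)) x - iterate (S j + (m - S j)) x) with
    ((iterate (S j + (n - S j)) x - iterate (S j) x)
     - (iterate (S j + (m - S j)) x - iterate (S j) x)) by ring.
  eapply Rle_lt_trans; [apply Rabs_triang|]. rewrite Rabs_Ropp.
  pose proof (iterate_tail j (n - S j) x). pose proof (iterate_tail j (m - S j) x). lra.
Qed.

Definition iterate_limit (x : R) : R := proj1_sig (Rcomplete.R_complete _ (iterate_cauchy x)).

Lemma iterate_limit_bound j x : Rabs (iterate_limit x - iterate (S j) x) <= tail_bound j.
Proof.
  assert (Hlim : Un_cv (fun m => iterate m x) (iterate_limit x)).
  { unfold iterate_limit. destruct (Rcomplete.R_complete _ (iterate_cauchy x)); auto. }
  apply le_epsilon. intros eps Heps. destruct (Hlim eps Heps) as [n Hn].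
  specialize (Hn (S j + n)%nat ltac:(lia)). unfold Rdist in Hn.
  pose proof (iterate_tail j n x).
  replace (iterate_limit x - iterate (S j) x) with
    (- (iterate (S j + n) x - iterate_limit x) + (iterate (S j + n) x - iterate (S j) x)) by ring.
  eapply Rle_trans; [apply Rabs_triang|]. rewrite Rabs_Ropp. lra.
Qed.

Lemma iterate_limit_contf : contf iterate_limit.
Proof.
  intros x0. apply continuity_pt_eps. intros eps Heps.
  destruct (tail_bound_small (eps/3) ltac:(lra)) as [j Hj].
  destruct (proj1 (continuity_pt_eps _ x0) (iterate_contf (S j) x0) (eps/3) ltac:(lra))
    as [d [Hd Hx]].
  exists d; split; auto. intros x Hx1.
  replace (iterate_limit x - iterate_limit x0) with
    ((iterate_limit x - iterate (S j) x) + (iterate (S j) x - iterate (S j) x0)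
     - (iterate_limit x0 - iterate (S j) x0)) by ring.
  eapply Rle_lt_trans; [apply Rabs_triang|].
  eapply Rle_lt_trans; [apply Rplus_le_compat_r, Rabs_triang|]. rewrite Rabs_Ropp.
  pose proof (iterate_limit_bound j x). pose proof (iterate_limit_bound j x0).
  pose proof (Hx x Hx1). lra.
Qed.

Lemma iterate_limit_fixed x : T iterate_limit x = iterate_limit x.
Proof.
  assert (0 <= K) by (eapply Rle_trans; [apply Rabs_pos | apply (K_bound 0); lra]).
  apply Rminus_diag_uniq. destruct (Req_dec (T iterate_limit x - iterate_limit x) 0) as [E|E];
    auto; exfalso.
  set (dlt := Rabs (T iterate_limit x - iterate_limit x)).
  assert (Hdlt : 0 < dlt) by (apply Rabs_pos_lt; auto).
  destruct (tail_bound_small (dlt/2) ltac:(lra)) as [j Hj].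
  assert (H1 : Rabs (T iterate_limit x - T (iterate (S j)) x) <= al * tail_bound j).
  { apply T_contraction; auto using iterate_contf, iterate_limit_contf. intros y _.
    apply iterate_limit_bound. }
  pose proof (iterate_limit_bound (S j) x) as H2. change (iterate (S (S j)) x) with
    (T (iterate (S j)) x) in H2.
  assert (tail_bound (S j) = al * tail_bound j) by (unfold tail_bound; simpl pow; field; lra).
  assert (dlt <= Rabs (T iterate_limit x - T (iterate (S j)) x)
                 + Rabs (iterate_limit x - T (iterate (S j)) x)).
  { unfold dlt. replace (T iterate_limit x - iterate_limit x) with
      ((T iterate_limit x - T (iterate (S j)) x) - (iterate_limit x - T (iterate (S j)) x)) by ring.
    eapply Rle_trans; [apply Rabs_triang|]. rewrite Rabs_Ropp. lra. }
  pose proof (tail_bound_nonneg j ltac:(lra)). nra.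
Qed.

End Iterates.

Lemma fixed_point_exists : exists psi, contf psi /\ forall x, T psi x = psi x.
Proof.
  destruct (contf_bounded_2 (fun x => iterate 1 x - iterate 0 x)) as [K HK].
  { intros x. apply continuity_pt_minus; apply iterate_contf. }
  exists (iterate_limit K HK). split.
  - apply iterate_limit_contf.
  - apply iterate_limit_fixed.
Qed.

Lemma fixed_point_stable T1 p1 p2 eps : contf p1 -> contf p2 ->
  (forall x, T1 p1 x = p1 x) -> (forall x, T p2 x = p2 x) ->
  (forall x, Rabs (T1 p1 x - T p1 x) <= eps) ->
  forall x, Rabs (p1 x - p2 x) <= eps / (1 - al).
Proof.
  intros H1 H2 F1 F2 He.
  assert (Heps : 0 <= eps) by (eapply Rle_trans; [apply Rabs_pos| apply (He 0)]).
  destruct (contf_bounded_2 (fun x => p1 x - p2 x)) as [D0 HD0].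
  { intros x. apply continuity_pt_minus; auto. }
  assert (Hal1 : 0 < 1 - al) by lra.
  assert (Step : forall k, (forall x, -2 <= x <= 2 -> Rabs (p1 x - p2 x) <= k) ->
                  forall x, Rabs (p1 x - p2 x) <= eps + al * k).
  { intros k Hk x. rewrite <- (F1 x), <- (F2 x).
    replace (T1 p1 x - T p2 x) with ((T1 p1 x - T p1 x) + (T p1 x - T p2 x)) by ring.
    eapply Rle_trans; [apply Rabs_triang|].
    pose proof (He x). pose proof (T_contraction p1 p2 k H1 H2 Hk x). lra. }
  assert (Hq : eps <= eps / (1 - al)).
  { apply Rmult_le_reg_r with (1 - al); auto. unfold Rdiv.
    rewrite Rmult_assoc, Rinv_l by lra. nra. }
  assert (Cl : forall j x, Rabs (p1 x - p2 x) <= al ^ j * Rabs D0 + eps / (1 - al)).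
  { induction j; intros x.
    - eapply Rle_trans; [apply Step; intros; eapply Rle_trans; [apply HD0; auto|apply Rle_abs]|].
      simpl pow. pose proof (Rabs_pos D0). nra.
    - eapply Rle_trans; [apply Step; intros y _; apply IHj|]. right. simpl pow. field. lra. }
  intros x. apply le_epsilon. intros d Hd.
  assert (HD : 0 <= Rabs D0) by apply Rabs_pos.
  destruct (pow_small al al_range (d / (Rabs D0 + 1))) as [j Hj]; [apply Rdiv_lt_0_compat; lra|].
  eapply Rle_trans; [apply (Cl j x)|].
  assert (al ^ j * Rabs D0 <= d).
  { apply Rle_trans with (d / (Rabs D0 + 1) * Rabs D0); [apply Rmult_le_compat_r; lra|].
    replace (d / (Rabs D0 + 1) * Rabs D0) with (d * (Rabs D0 / (Rabs D0 + 1))) by (field; lra).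
    assert (Rabs D0 / (Rabs D0 + 1) <= 1).
    { apply Rmult_le_reg_r with (Rabs D0 + 1); [lra|].
      replace (Rabs D0 / (Rabs D0 + 1) * (Rabs D0 + 1)) with (Rabs D0) by (field; lra). lra. }
    nra. }
  lra.
Qed.

End Banach.

Section Construction.
(* N = m + 1 is the dimension parameter; q is the nonlinearity seen by the positive
   profile v, i.e. ((-v')^N)' = lam^N N r^(N-1) q(v). *)
Variable m : nat.
Local Notation N := (S m).
Variables (lam : R) (q : R -> R).
Hypothesis lam_pos : 0 < lam.
Hypothesis q_continuous : forall x, continuity_pt q x.
Hypothesis q_pos : forall x, 0 < x -> 0 < q x.

Definition qext (x : R) : R := Rmax 0 (q (Rabs x)).

(* With v = a (1 - e^2), the nonlinearity along the variable e = th. *)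
Definition Qa (a th : R) : R := qext (a * (1 - th ^ 2)).

(* the kernel exp((N-1) psi) q(v) of the integral defining W *)
Definition Ka (a : R) (psi : R -> R) (th : R) : R := exp (INR m * psi th) * Qa a th.

Definition cW (a : R) : R := 2 * a * INR (S N) * lam ^ N.

Definition Iint (a : R) (psi : R -> R) (c : R) : R := param_int (fun t => t ^ N) (Ka a psi) c.

(* W(eta) = (-v')^(N+1) / e^(N+1), expressed through psi; the clamp makes it
   depend on psi only through its values on [-2,2]. *)
Definition Wa (a : R) (psi : R -> R) (eta : R) : R := cW a * Iint a psi (clamp eta).

Definition root_inv (W : R -> R) (th : R) : R := exp (- ln (W th) / INR (S N)).

(* 2a times the mean of W^(-1/(N+1)) over [0, eta]: the candidate for rho(eta)/eta *)
Definition Phi (a : R) (W : R -> R) (eta : R) : R :=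
  2 * a * param_int (fun _ => 1) (root_inv W) eta.

(* The operator whose fixed point encodes a solution: exp (Ta psi) = Phi (Wa psi). *)
Definition Ta (a : R) (psi : R -> R) (eta : R) : R := ln (Phi a (Wa a psi) eta).

Lemma qext_continuous x : continuity_pt qext x.
Proof.
  unfold qext. apply (continuity_pt_nonexpansive_comp (Rmax 0) (fun x => q (Rabs x))).
  - intros u v. unfold Rmax. repeat destruct Rle_dec; unfold Rabs; repeat destruct Rcase_abs; lra.
  - apply (continuity_pt_comp Rabs q); [apply Rcontinuity_abs | apply q_continuous].
Qed.

Lemma qext_nonneg x : 0 <= qext x.
Proof. apply Rmax_l. Qed.

Lemma qext_eq x : 0 < x -> qext x = q x.
Proof.
  intros Hx. unfold qext. rewrite Rabs_right by lra.
  apply Rmax_right. left; apply q_pos; auto.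
Qed.

Lemma Qa_eq a th : 0 < a * (1 - th ^ 2) -> Qa a th = q (a * (1 - th ^ 2)).
Proof. apply qext_eq. Qed.

Lemma Qa_continuous a th : continuity_pt (Qa a) th.
Proof.
  apply (continuity_pt_comp (fun th => a * (1 - th ^ 2)) qext); [|apply qext_continuous].
  apply continuity_pt_scal, continuity_pt_minus;
    [apply continuity_pt_const; intros u v; auto | apply pow_continuous].
Qed.

Lemma Ka_continuous a psi th : contf psi -> continuity_pt (Ka a psi) th.
Proof.
  intros Hp. apply continuity_pt_mult; [|apply Qa_continuous].
  apply (continuity_pt_comp (fun th => INR m * psi th) exp); [|apply exp_continuous].
  apply continuity_pt_scal, Hp.
Qed.

Lemma Ka_nonneg a psi th : 0 <= Ka a psi th.
Proof. apply Rmult_le_pos; [left; apply exp_pos | apply qext_nonneg]. Qed.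

Lemma cW_pos a : 0 < a -> 0 < cW a.
Proof.
  intros Ha. unfold cW. repeat apply Rmult_lt_0_compat; try lra.
  - apply lt_0_INR; lia.
  - apply pow_lt; auto.
Qed.

Lemma ex_RInt_Iint a psi c : contf psi -> ex_RInt (fun t => t ^ N * Ka a psi (c * t)) 0 1.
Proof.
  intros Hp. apply ex_RInt_param; [intros; apply pow_continuous | intros; apply Ka_continuous; auto].
Qed.

Lemma Iint_continuous a psi c : contf psi -> continuity_pt (Iint a psi) c.
Proof.
  intros Hp. apply param_int_continuous; [intros; apply pow_continuous | apply pow_le_1 |].
  intros; apply Ka_continuous; auto.
Qed.

(* On [0,1/2] the argument a (1 - (c t)^2) stays positive, which makes I positive. *)
Lemma Iint_pos a psi c : 0 < a -> contf psi -> -2 <= c <= 2 -> 0 < Iint a psi c.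
Proof.
  intros Ha Hp Hc. unfold Iint, param_int.
  assert (Hex : forall u v, ex_RInt (fun t => t ^ N * Ka a psi (c * t)) u v).
  { intros u v. apply (@ex_RInt_continuous R_CompleteNormedModule). intros z _.
    apply continuity_pt_filterlim, param_integrand_continuous;
      [apply pow_continuous | apply Ka_continuous; auto]. }
  rewrite <- (RInt_Chasles _ 0 (1/2) 1) by auto.
  change (plus ?x ?y) with (x + y).
  assert (0 < RInt (fun t => t ^ N * Ka a psi (c * t)) 0 (1/2)).
  { apply RInt_gt_0; [lra| |].
    - intros x Hx. apply Rmult_lt_0_compat; [apply pow_lt; lra|].
      assert (Hpos : 0 < a * (1 - (c * x) ^ 2)).
      { apply Rmult_lt_0_compat; auto.
        replace ((c*x)^2) with (c^2 * x^2) by ring.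
        assert (c^2 <= 4) by nra. assert (x^2 < 1/4) by nra.
        assert (0 <= c^2) by nra. nra. }
      unfold Ka, Qa. rewrite qext_eq by auto.
      apply Rmult_lt_0_compat; [apply exp_pos | apply q_pos; auto].
    - intros x _. apply continuity_pt_filterlim, param_integrand_continuous;
        [apply pow_continuous | apply Ka_continuous; auto]. }
  assert (0 <= RInt (fun t => t ^ N * Ka a psi (c * t)) (1/2) 1).
  { apply RInt_ge_0; [lra | auto |]. intros x Hx.
    apply Rmult_le_pos; [apply pow_le; lra | apply Ka_nonneg]. }
  lra.
Qed.

Lemma Wa_pos a psi eta : 0 < a -> contf psi -> 0 < Wa a psi eta.
Proof.
  intros Ha Hp. apply Rmult_lt_0_compat; [apply cW_pos; auto|].
  apply Iint_pos; auto. apply clamp_range.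
Qed.

Lemma Wa_continuous a psi eta : contf psi -> continuity_pt (Wa a psi) eta.
Proof.
  intros Hp. apply continuity_pt_scal.
  apply (continuity_pt_comp clamp); [apply clamp_continuous | apply Iint_continuous; auto].
Qed.

Lemma root_inv_continuous W th : contf W -> (forall x, 0 < W x) ->
  continuity_pt (root_inv W) th.
Proof.
  intros HW Hp. unfold root_inv.
  apply (continuity_pt_comp (fun th => - ln (W th) / INR (S N)) exp); [|apply exp_continuous].
  unfold Rdiv. apply continuity_pt_mult; [|apply continuity_pt_const; intros u v; auto].
  apply continuity_pt_opp, (continuity_pt_comp W ln); [apply HW | apply ln_continuous; auto].
Qed.

Lemma ex_RInt_Phi W eta : contf W -> (forall x, 0 < W x) ->
  ex_RInt (fun t => 1 * root_inv W (eta * t)) 0 1.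
Proof.
  intros HW Hp. apply ex_RInt_param; [intros; apply continuity_pt_const; intros u v; auto|].
  intros; apply root_inv_continuous; auto.
Qed.

Lemma Phi_pos a W eta : 0 < a -> contf W -> (forall x, 0 < W x) -> 0 < Phi a W eta.
Proof.
  intros Ha HW Hp. apply Rmult_lt_0_compat; [lra|]. apply RInt_gt_0; [lra| |].
  - intros x _. rewrite Rmult_1_l. apply exp_pos.
  - intros x _. apply continuity_pt_filterlim, param_integrand_continuous;
      [apply continuity_pt_const; intros u v; auto | apply root_inv_continuous; auto].
Qed.

Lemma Phi_continuous a W eta : contf W -> (forall x, 0 < W x) ->
  continuity_pt (Phi a W) eta.
Proof.
  intros HW Hp. apply continuity_pt_scal, param_int_continuous.
  - intros; apply continuity_pt_const; intros u v; auto.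
  - intros; rewrite Rabs_R1; lra.
  - intros; apply root_inv_continuous; auto.
Qed.

Lemma Phi_Wa_pos a psi eta : 0 < a -> contf psi -> 0 < Phi a (Wa a psi) eta.
Proof.
  intros Ha Hp. apply Phi_pos; auto; intros x; [apply Wa_continuous | apply Wa_pos]; auto.
Qed.

Lemma Ta_contf a psi : 0 < a -> contf psi -> contf (Ta a psi).
Proof.
  intros Ha Hp eta. apply (continuity_pt_comp _ ln).
  - apply Phi_continuous; intros x; [apply Wa_continuous | apply Wa_pos]; auto.
  - apply ln_continuous, Phi_Wa_pos; auto.
Qed.

(* Contraction: changing psi by at most k on [-2,2] changes W by a factor at most
   exp(m k), hence ln Phi by at most m k / (N+1). *)
Lemma Ka_ratio a psi1 psi2 k x : psi1 x <= psi2 x + k ->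
  Ka a psi1 x <= exp (INR m * k) * Ka a psi2 x.
Proof.
  intros H. unfold Ka. rewrite <- Rmult_assoc, <- exp_plus.
  apply Rmult_le_compat_r; [apply qext_nonneg|]. apply exp_le_exp.
  pose proof (pos_INR m). nra.
Qed.

Lemma Wa_ratio a psi1 psi2 k : 0 < a -> contf psi1 -> contf psi2 ->
  (forall x, -2 <= x <= 2 -> psi1 x <= psi2 x + k) ->
  forall th, Wa a psi1 th <= exp (INR m * k) * Wa a psi2 th.
Proof.
  intros Ha Hp1 Hp2 H th. unfold Wa.
  rewrite (Rmult_comm (exp _)), Rmult_assoc. apply Rmult_le_compat_l; [left; apply cW_pos; auto|].
  unfold Iint, param_int. rewrite Rmult_comm, <- RInt_scal_01 by (apply ex_RInt_Iint; auto).
  apply RInt_le_01; [apply ex_RInt_Iint; auto | apply ex_RInt_scal_01, ex_RInt_Iint; auto |].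
  intros t Ht. rewrite <- Rmult_assoc, (Rmult_comm _ (t ^ N)), Rmult_assoc.
  apply Rmult_le_compat_l; [apply pow_le; lra|]. apply Ka_ratio, H.
  pose proof (clamp_range th). split; nra.
Qed.

Lemma root_inv_ratio W1 W2 c th : 0 < W1 th -> 0 < W2 th -> W1 th <= exp c * W2 th ->
  exp (- c / INR (S N)) * root_inv W2 th <= root_inv W1 th.
Proof.
  intros H1 H2 H. unfold root_inv. rewrite <- exp_plus. apply exp_le_exp.
  assert (ln (W1 th) <= c + ln (W2 th)).
  { rewrite <- (ln_exp c), <- ln_mult by (auto; apply exp_pos). apply ln_le; auto. }
  assert (0 < INR (S N)) by (apply lt_0_INR; lia).
  unfold Rdiv. rewrite <- Rmult_plus_distr_r.
  apply Rmult_le_compat_r; [left; apply Rinv_0_lt_compat; auto | lra].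
Qed.

Lemma ln_Phi_ratio a W1 W2 c : 0 < a -> contf W1 -> contf W2 ->
  (forall x, 0 < W1 x) -> (forall x, 0 < W2 x) -> (forall th, W1 th <= exp c * W2 th) ->
  forall eta, ln (Phi a W2 eta) - c / INR (S N) <= ln (Phi a W1 eta).
Proof.
  intros Ha HW1 HW2 Hp1 Hp2 H eta.
  assert (HP : exp (- c / INR (S N)) * Phi a W2 eta <= Phi a W1 eta).
  { unfold Phi, param_int.
    rewrite (Rmult_comm (exp _)), Rmult_assoc. apply Rmult_le_compat_l; [lra|].
    rewrite Rmult_comm, <- RInt_scal_01 by (apply ex_RInt_Phi; auto).
    apply RInt_le_01; [apply ex_RInt_scal_01, ex_RInt_Phi; auto | apply ex_RInt_Phi; auto |].
    intros t Ht. rewrite !Rmult_1_l. apply root_inv_ratio; auto. }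
  assert (0 < Phi a W2 eta) by (apply Phi_pos; auto).
  assert (ln (exp (- c / INR (S N)) * Phi a W2 eta) <= ln (Phi a W1 eta))
    by (apply ln_le; auto; apply Rmult_lt_0_compat; auto; apply exp_pos).
  rewrite ln_mult, ln_exp in H1 by (auto; apply exp_pos). unfold Rdiv in *. lra.
Qed.

Definition alpha : R := INR m / INR (S N).

Lemma alpha_range : 0 <= alpha < 1.
Proof.
  unfold alpha. assert (0 < INR (S N)) by (apply lt_0_INR; lia).
  split; [apply Rdiv_le_0_compat; auto; apply pos_INR|].
  apply Rmult_lt_reg_r with (INR (S N)); auto. unfold Rdiv.
  rewrite Rmult_assoc, Rinv_l, Rmult_1_r, Rmult_1_l by lra. apply lt_INR. lia.
Qed.

Lemma Ta_contraction a : 0 < a -> contraction (Ta a) alpha.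
Proof.
  intros Ha psi1 psi2 k Hp1 Hp2 H eta.
  assert (Hk : forall x, -2 <= x <= 2 -> psi1 x <= psi2 x + k /\ psi2 x <= psi1 x + k)
    by (intros x Hx; specialize (H x Hx); apply Rabs_le_between in H; lra).
  assert (Wc : forall psi, contf psi -> contf (Wa a psi)) by (intros ? ? x; apply Wa_continuous; auto).
  assert (Wp : forall psi, contf psi -> forall x, 0 < Wa a psi x) by (intros; apply Wa_pos; auto).
  pose proof (ln_Phi_ratio a _ _ _ Ha (Wc _ Hp1) (Wc _ Hp2) (Wp _ Hp1) (Wp _ Hp2)
               (Wa_ratio a psi1 psi2 k Ha Hp1 Hp2 (fun x Hx => proj1 (Hk x Hx))) eta).
  pose proof (ln_Phi_ratio a _ _ _ Ha (Wc _ Hp2) (Wc _ Hp1) (Wp _ Hp2) (Wp _ Hp1)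
               (Wa_ratio a psi2 psi1 k Ha Hp2 Hp1 (fun x Hx => proj2 (Hk x Hx))) eta).
  unfold Ta, alpha. apply Rabs_le_between.
  replace (INR m / INR (S N) * k) with (INR m * k / INR (S N)) by (unfold Rdiv; ring).
  lra.
Qed.

(* Continuous dependence on the parameter a, first for the nonlinearity Qa on [-2,2]
   (uniform continuity of qext on a compact interval), then for I(a). *)
Lemma Qa_close a om : 0 < om -> exists d, 0 < d /\
  forall b, Rabs (b - a) < d -> forall th, -2 <= th <= 2 -> Rabs (Qa b th - Qa a th) < om.
Proof.
  intros Hom. set (L := 3 * (Rabs a + 1)).
  destruct (Heine qext (fun c => -L <= c <= L) (compact_P3 (-L) L)
              (fun x _ => qext_continuous x) (mkposreal om Hom)) as [[del Hdel] Hud].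
  simpl in Hud. exists (Rmin 1 (del / 3)). split; [apply Rmin_pos; lra|].
  intros b Hb th Hth.
  assert (Hb1 : Rabs (b - a) < 1) by (eapply Rlt_le_trans; [exact Hb| apply Rmin_l]).
  assert (Hb2 : Rabs (b - a) < del / 3) by (eapply Rlt_le_trans; [exact Hb| apply Rmin_r]).
  assert (Hba : Rabs b <= Rabs a + 1).
  { replace b with (a + (b - a)) by ring. eapply Rle_trans; [apply Rabs_triang | lra]. }
  unfold Qa. set (y := 1 - th ^ 2).
  assert (Hy : Rabs y <= 3) by (apply Rabs_le; unfold y; nra).
  pose proof (Rabs_pos y). pose proof (Rabs_pos a). pose proof (Rabs_pos b).
  apply Hud; try (apply Rabs_le_between; rewrite Rabs_mult; unfold L; nra).
  replace (b * y - a * y) with ((b - a) * y) by ring. rewrite Rabs_mult.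
  pose proof (Rabs_pos (b - a)). nra.
Qed.

Lemma Iint_close_abs a psi : contf psi -> forall om, 0 < om ->
  exists d, 0 < d /\ forall b, Rabs (b - a) < d -> forall c, -2 <= c <= 2 ->
    Rabs (Iint b psi c - Iint a psi c) <= om.
Proof.
  intros Hp om Hom.
  destruct (contf_bounded_2 (fun x => exp (INR m * psi x))) as [E HE].
  { intros x. apply (continuity_pt_comp (fun x => INR m * psi x) exp);
      [apply continuity_pt_scal, Hp | apply exp_continuous]. }
  assert (HE0 : 0 <= E) by (eapply Rle_trans; [apply Rabs_pos | apply (HE 0); lra]).
  destruct (Qa_close a (om / (E + 1)) ltac:(apply Rdiv_lt_0_compat; lra)) as [d [Hd HQ]].
  exists d. split; auto. intros b Hb c Hc.
  unfold Iint, param_int. rewrite <- RInt_minus_01 by (apply ex_RInt_Iint; auto).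
  apply RInt_abs_le_01.
  { apply ex_RInt_01. intros t _. apply continuity_pt_minus; apply param_integrand_continuous;
      try apply pow_continuous; apply Ka_continuous; auto. }
  (* pointwise: |t^N| <= 1, |exp(m psi)| <= E and |Delta Qa| < om / (E + 1) *)
  intros t Ht. rewrite <- Rmult_minus_distr_l, Rabs_mult. unfold Ka.
  rewrite <- Rmult_minus_distr_l, Rabs_mult.
  assert (Hct : -2 <= c * t <= 2) by (split; nra).
  assert (H1 : Rabs (t ^ N) <= 1) by (apply pow_le_1; auto).
  assert (H2 := HE (c * t) Hct).
  assert (H3 := HQ b Hb (c * t) Hct).
  assert (E * (om / (E + 1)) <= om).
  { apply Rmult_le_reg_r with (E + 1); [lra|].
    replace (E * (om / (E + 1)) * (E + 1)) with (E * om) by (field; lra). nra. }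
  pose proof (Rabs_pos (t ^ N)). pose proof (Rabs_pos (exp (INR m * psi (c * t)))).
  pose proof (Rabs_pos (Qa b (c * t) - Qa a (c * t))).
  apply Rle_trans with (1 * (E * (om / (E + 1)))); [|lra].
  apply Rmult_le_compat; auto; [apply Rmult_le_pos; auto|].
  apply Rmult_le_compat; auto; lra.
Qed.

(* the same closeness in multiplicative form, using that I(a) > 0 on [-2,2] *)
Lemma Iint_close a psi : 0 < a -> contf psi -> forall kap, 0 < kap ->
  exists d, 0 < d /\ forall b, Rabs (b - a) < d -> forall c, -2 <= c <= 2 ->
    Iint b psi c <= exp kap * Iint a psi c /\ Iint a psi c <= exp kap * Iint b psi c.
Proof.
  intros Ha Hp kap Hkap.
  destruct (continuity_ab_min (Iint a psi) (-2) 2 ltac:(lra)) as [cm [Hcm Hcm2]].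
  { intros; apply Iint_continuous; auto. }
  assert (Hm0 : 0 < Iint a psi cm) by (apply Iint_pos; auto).
  destruct (Iint_close_abs a psi Hp (Rmin (Iint a psi cm / 2) (kap * Iint a psi cm / 2)))
    as [d [Hd Hclose]]; [apply Rmin_pos; nra|].
  exists d. split; auto. intros b Hb c Hc.
  specialize (Hclose b Hb c Hc). apply Rabs_le_between in Hclose.
  pose proof (Rmin_l (Iint a psi cm / 2) (kap * Iint a psi cm / 2)).
  pose proof (Rmin_r (Iint a psi cm / 2) (kap * Iint a psi cm / 2)).
  assert (HIa : Iint a psi cm <= Iint a psi c) by (apply Hcm; auto).
  pose proof (exp_ineq1_le kap). split.
  - apply Rle_trans with ((1 + kap) * Iint a psi c); [nra|]. apply Rmult_le_compat_r; lra.
  - apply Rle_trans with ((1 + kap) * Iint b psi c); [nra|]. apply Rmult_le_compat_r; lra.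
Qed.

Lemma Wa_close a b psi kap c1 : 0 < a -> 0 < b -> contf psi -> ln b - ln a + kap <= c1 ->
  (forall c, -2 <= c <= 2 -> Iint b psi c <= exp kap * Iint a psi c) ->
  forall th, Wa b psi th <= exp c1 * Wa a psi th.
Proof.
  intros Ha Hb Hp Hc1 HI th. unfold Wa.
  assert (HcW : cW b = exp (ln b - ln a) * cW a).
  { unfold Rminus. rewrite exp_plus, exp_Ropp, !exp_ln by auto. unfold cW. field. lra. }
  assert (0 < Iint a psi (clamp th)) by (apply Iint_pos; auto; apply clamp_range).
  assert (0 < cW a) by (apply cW_pos; auto).
  rewrite HcW. apply Rle_trans with (exp (ln b - ln a + kap) * (cW a * Iint a psi (clamp th))).
  - rewrite exp_plus.
    replace (exp (ln b - ln a) * exp kap * (cW a * Iint a psi (clamp th)))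
      with (exp (ln b - ln a) * cW a * (exp kap * Iint a psi (clamp th))) by ring.
    apply Rmult_le_compat_l; [apply Rmult_le_pos; [left; apply exp_pos | lra]|].
    apply HI, clamp_range.
  - apply Rmult_le_compat_r; [nra | apply exp_le_exp; lra].
Qed.

Lemma Ta_rescale a b psi x : 0 < a -> 0 < b -> contf psi ->
  Ta b psi x = (ln b - ln a) + ln (Phi a (Wa b psi) x).
Proof.
  intros Ha Hb Hp. unfold Ta.
  assert (E : Phi b (Wa b psi) x = (b / a) * Phi a (Wa b psi) x) by (unfold Phi; field; lra).
  assert (0 < Phi a (Wa b psi) x).
  { apply Phi_pos; auto; intros y; [apply Wa_continuous | apply Wa_pos]; auto. }
  rewrite E, ln_mult by (try apply Rdiv_lt_0_compat; auto).
  unfold Rdiv. rewrite ln_mult, ln_Rinv by (auto; apply Rinv_0_lt_compat; auto). ring.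
Qed.

Lemma Ta_close_a a psi : 0 < a -> contf psi -> forall eps, 0 < eps ->
  exists d, 0 < d /\ forall b, Rabs (b - a) < d -> 0 < b ->
    forall x, Rabs (Ta a psi x - Ta b psi x) <= eps.
Proof.
  intros Ha Hp eps Heps.
  destruct (proj1 (continuity_pt_eps ln a) (ln_continuous a Ha) (eps/3) ltac:(lra))
    as [d1 [Hd1 H1]].
  destruct (Iint_close a psi Ha Hp (eps/3) ltac:(lra)) as [d2 [Hd2 H2]].
  exists (Rmin d1 d2). split; [apply Rmin_pos; auto|].
  intros b Hb Hb0 x.
  assert (Hl1 : Rabs (ln b - ln a) < eps / 3)
    by (apply H1; eapply Rlt_le_trans; [exact Hb| apply Rmin_l]).
  assert (HI := H2 b ltac:(eapply Rlt_le_trans; [exact Hb| apply Rmin_r])).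
  set (c1 := Rabs (ln b - ln a) + eps / 3).
  pose proof (Rle_abs (ln b - ln a)) as Hab. pose proof (Rle_abs (ln a - ln b)) as Hba.
  rewrite Rabs_minus_sym in Hba.
  assert (HW1 : forall th, Wa b psi th <= exp c1 * Wa a psi th).
  { apply (Wa_close a b psi (eps / 3)); auto; [unfold c1; lra|]. apply HI. }
  assert (HW2 : forall th, Wa a psi th <= exp c1 * Wa b psi th).
  { apply (Wa_close b a psi (eps / 3)); auto; [unfold c1; lra|]. apply HI. }
  assert (Wc : forall bb, contf (Wa bb psi)) by (intros ? ?; apply Wa_continuous; auto).
  assert (Wp : forall bb, 0 < bb -> forall y, 0 < Wa bb psi y) by (intros; apply Wa_pos; auto).
  pose proof (ln_Phi_ratio a _ _ _ Ha (Wc b) (Wc a) (Wp b Hb0) (Wp a Ha) HW1 x).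
  pose proof (ln_Phi_ratio a _ _ _ Ha (Wc a) (Wc b) (Wp a Ha) (Wp b Hb0) HW2 x).
  rewrite (Ta_rescale a b psi x) by auto. unfold Ta.
  assert (1 <= INR (S N)) by (apply (le_INR 1); lia).
  assert (0 <= c1) by (unfold c1; pose proof (Rabs_pos (ln b - ln a)); lra).
  assert (c1 / INR (S N) <= c1).
  { unfold Rdiv. apply Rle_trans with (c1 * 1); [|lra]. apply Rmult_le_compat_l; auto.
    rewrite <- Rinv_1. apply Rinv_le_contravar; lra. }
  apply Rabs_le_between. unfold c1 in *. split; lra.
Qed.

Definition psiA (a : R) : R -> R :=
  epsilon (inhabits (fun _ : R => 0)) (fun psi => contf psi /\ forall x, Ta a psi x = psi x).

Lemma psiA_spec a : 0 < a -> contf (psiA a) /\ forall x, Ta a (psiA a) x = psiA a x.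
Proof.
  intros Ha. unfold psiA. apply epsilon_spec.
  apply (fixed_point_exists (Ta a) alpha alpha_range); intros; [apply Ta_contf | apply Ta_contraction]; auto.
Qed.

Lemma psiA_continuous_in_a x a0 : 0 < a0 -> continuity_pt (fun a => psiA a x) a0.
Proof.
  intros Ha0. apply continuity_pt_eps. intros eps Heps.
  destruct alpha_range as [Hal0 Hal1].
  destruct (psiA_spec a0 Ha0) as [Hc0 Hf0].
  destruct (Ta_close_a a0 (psiA a0) Ha0 Hc0 (eps * (1 - alpha) / 2)) as [d [Hd H]].
  { apply Rdiv_lt_0_compat; nra. }
  exists (Rmin d a0). split; [apply Rmin_pos; auto|].
  intros b Hb.
  assert (Hb1 : Rabs (b - a0) < d) by (eapply Rlt_le_trans; [exact Hb| apply Rmin_l]).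
  assert (Hb2 : Rabs (b - a0) < a0) by (eapply Rlt_le_trans; [exact Hb| apply Rmin_r]).
  assert (Hb0 : 0 < b) by (apply Rabs_def2 in Hb2; lra).
  destruct (psiA_spec b Hb0) as [Hcb Hfb].
  pose proof (fixed_point_stable (Ta b) alpha alpha_range (Ta_contraction b Hb0)
                (Ta a0) _ _ _ Hc0 Hcb Hf0 Hfb (H b Hb1 Hb0) x) as S.
  rewrite Rabs_minus_sym. eapply Rle_lt_trans; [exact S|].
  replace (eps * (1 - alpha) / 2 / (1 - alpha)) with (eps / 2) by (field; lra). lra.
Qed.

(* Along the variable e in [-2,2]:
     rho(e) = e exp(psi(e)) = 2a int_0^e G        (G = W^(-1/(N+1)) = 1/E),
     g(e)   = e E(e)                              (this will be -v'),
   and the fixed point equation turns into the key identity relating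
   (g^N)' to rho^(N-1) rho' and q. *)
Section Profile.
Variable a : R.
Hypothesis a_pos : 0 < a.
Local Notation psi := (psiA a).

Lemma psi_contf : contf psi.
Proof. exact (proj1 (psiA_spec a a_pos)). Qed.

Lemma psi_fixed x : Ta a psi x = psi x.
Proof. exact (proj2 (psiA_spec a a_pos) x). Qed.

Definition W (y : R) : R := Wa a psi y.
Definition E (y : R) : R := exp (ln (W y) / INR (S N)).
Definition G (y : R) : R := root_inv W y.
Definition rho (y : R) : R := y * exp (psi y).
Definition g (y : R) : R := y * E y.
Definition dg (y : R) : R := cW a / INR (S N) * E y * Ka a psi y / W y.

Lemma W_pos y : 0 < W y.
Proof. apply Wa_pos; auto; apply psi_contf. Qed.

Lemma W_continuous y : continuity_pt W y.
Proof. apply Wa_continuous, psi_contf. Qed.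

Lemma INR_SN_pos : 0 < INR (S N).
Proof. apply lt_0_INR; lia. Qed.

Lemma E_continuous y : continuity_pt E y.
Proof.
  apply (continuity_pt_comp (fun y => ln (W y) / INR (S N)) exp); [|apply exp_continuous].
  unfold Rdiv. apply continuity_pt_mult; [|apply continuity_pt_const; intros u v; auto].
  apply (continuity_pt_comp W ln); [apply W_continuous | apply ln_continuous, W_pos].
Qed.

Lemma G_continuous y : continuity_pt G y.
Proof. apply root_inv_continuous; [intros x; apply W_continuous | apply W_pos]. Qed.

Lemma E_pos y : 0 < E y.
Proof. apply exp_pos. Qed.

Lemma G_pos y : 0 < G y.
Proof. apply exp_pos. Qed.

Lemma E_G y : E y * G y = 1.
Proof.
  unfold E, G, root_inv. rewrite <- exp_plus. unfold Rdiv.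
  rewrite <- Rmult_plus_distr_r, Rplus_opp_r, Rmult_0_l, exp_0. auto.
Qed.

Lemma G_inv y : G y = / E y.
Proof. pose proof (E_G y). pose proof (E_pos y). field_simplify_eq; lra. Qed.

Lemma g_G y : g y * G y = y.
Proof. unfold g. rewrite Rmult_assoc, E_G. ring. Qed.

Lemma E_pow y : E y ^ S N = W y.
Proof.
  unfold E. rewrite exp_pow_INR.
  replace (INR (S N) * (ln (W y) / INR (S N))) with (ln (W y))
    by (field; apply Rgt_not_eq, INR_SN_pos).
  apply exp_ln, W_pos.
Qed.

Lemma rho_eq y : rho y = 2 * a * RInt G 0 y.
Proof.
  unfold rho. rewrite <- psi_fixed. unfold Ta.
  rewrite exp_ln by (apply Phi_Wa_pos; auto; apply psi_contf).
  unfold Phi, param_int. rewrite <- (RInt_rescale G y) by apply G_continuous.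
  rewrite (RInt_ext (fun t => 1 * root_inv (Wa a psi) (y * t)) (fun t => G (y * t)))
    by (intros; apply Rmult_1_l).
  ring.
Qed.

Lemma rho_deriv y : is_derive rho y (2 * a * G y).
Proof.
  apply (is_derive_ext (fun y => 2 * a * RInt G 0 y)); [intros t; symmetry; apply rho_eq|].
  apply is_derive_scal, is_derive_RInt_0, G_continuous.
Qed.

Lemma rho_continuous y : continuity_pt rho y.
Proof.
  apply continuity_pt_mult; [apply continuity_pt_id|].
  apply (continuity_pt_comp psi exp); [apply psi_contf | apply exp_continuous].
Qed.

Lemma rho_0 : rho 0 = 0.
Proof. unfold rho. ring. Qed.

Lemma rho_incr x y : x < y -> rho x < rho y.
Proof.
  intros Hxy. apply (increasing_of_deriv rho (fun t => 2 * a * G t)); auto.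
  - intros; apply rho_continuous.
  - intros; apply rho_deriv.
  - intros; apply Rmult_lt_0_compat; [lra | apply G_pos].
Qed.

Lemma rho_le x y : x <= y -> rho x <= rho y.
Proof. intros [Hl|<-]; [left; apply rho_incr; auto | lra]. Qed.

Lemma rho_pos y : 0 < y -> 0 < rho y.
Proof. intros H. rewrite <- rho_0. apply rho_incr; auto. Qed.

Lemma rho_nonneg y : 0 <= y -> 0 <= rho y.
Proof. intros H. rewrite <- rho_0. apply rho_le; auto. Qed.

Lemma g_continuous y : continuity_pt g y.
Proof. apply continuity_pt_mult; [apply continuity_pt_id | apply E_continuous]. Qed.

Lemma g_0 : g 0 = 0.
Proof. unfold g. ring. Qed.

Lemma g_pos y : 0 < y -> 0 < g y.
Proof. intros H. apply Rmult_lt_0_compat; auto. apply E_pos. Qed.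

(* W(y) y^(N+1) = cW int_0^y th^N K(th) on [-2,2] (undoing the substitution th = y t) *)
Lemma W_times_pow y : -2 <= y <= 2 ->
  W y * y ^ S N = cW a * RInt (fun th => th ^ N * Ka a psi th) 0 y.
Proof.
  intros Hy. unfold W, Wa, Iint, param_int. rewrite clamp_id by auto.
  rewrite Rmult_assoc. f_equal.
  rewrite <- (RInt_rescale (fun th => th ^ N * Ka a psi th) y).
  2:{ intros x. apply continuity_pt_mult; [apply pow_continuous | apply Ka_continuous, psi_contf]. }
  change (y ^ S N) with (y * y ^ N).
  rewrite Rmult_comm, Rmult_assoc. f_equal.
  rewrite <- RInt_scal_01 by (apply ex_RInt_Iint, psi_contf).
  apply RInt_ext. intros t _. rewrite Rpow_mult_distr, Rmult_assoc. reflexivity.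
Qed.

Lemma W_deriv y : 0 < Rabs y < 2 ->
  is_derive W y (cW a * Ka a psi y / y - INR (S N) * W y / y).
Proof.
  intros Hy. set (d := Rmin (2 - Rabs y) (Rabs y)).
  assert (Hd0 : 0 < d) by (apply Rmin_pos; lra).
  assert (Hy0 : y <> 0) by (intro E0; rewrite E0, Rabs_R0 in Hy; lra).
  assert (Hcont : forall x, continuity_pt (fun th => th ^ N * Ka a psi th) x).
  { intros x. apply continuity_pt_mult; [apply pow_continuous | apply Ka_continuous, psi_contf]. }
  apply (is_derive_ext_loc
           (fun t => cW a * RInt (fun th => th ^ N * Ka a psi th) 0 t / t ^ S N)).
  { exists (mkposreal d Hd0). intros t Ht. simpl in Ht. unfold ball in Ht. simpl in Ht.
    unfold AbsRing_ball, abs, minus, plus, opp in Ht. simpl in Ht.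
    assert (Ht1 : Rabs (t - y) < 2 - Rabs y) by (eapply Rlt_le_trans; [exact Ht|apply Rmin_l]).
    assert (Ht2 : Rabs (t - y) < Rabs y) by (eapply Rlt_le_trans; [exact Ht|apply Rmin_r]).
    pose proof (Rabs_triang_inv y t). pose proof (Rabs_triang_inv t y).
    rewrite (Rabs_minus_sym y t) in H.
    assert (t <> 0) by (intro E0; rewrite E0, Rabs_R0 in *; lra).
    rewrite <- W_times_pow by (apply Rabs_le_between; lra).
    unfold Rdiv. rewrite Rmult_assoc, Rinv_r, Rmult_1_r; auto. apply pow_nonzero; auto. }
  eapply is_derive_eq.
  - apply is_derive_div; [apply is_derive_scal, is_derive_RInt_0, Hcont
                          | apply is_derive_pow, is_derive_id | apply pow_nonzero; auto].
  - cbv beta. change one with 1. rewrite <- (W_times_pow y) by (apply Rabs_le_between; lra).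
    simpl pred. rewrite !S_INR. simpl pow. field. split; auto. apply pow_nonzero; auto.
Qed.

Lemma g_deriv y : 0 < Rabs y < 2 -> is_derive g y (dg y).
Proof.
  intros Hy. assert (Hy0 : y <> 0) by (intro E0; rewrite E0, Rabs_R0 in Hy; lra).
  pose proof (W_pos y). pose proof INR_SN_pos.
  unfold g, E. eapply is_derive_eq.
  - apply is_derive_Rmult; [apply is_derive_id|].
    apply (is_derive_comp exp (fun t => ln (W t) / INR (S N))); [apply is_derive_exp|].
    apply (is_derive_ext (fun t => / INR (S N) * ln (W t))); [intros t; unfold Rdiv; apply Rmult_comm|].
    apply is_derive_scal, (is_derive_comp ln W); [apply is_derive_ln; auto | apply W_deriv; auto].
  - unfold dg, E. change one with 1. repeat change (scal ?x ?y) with (x * y). field. lra.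
Qed.

Lemma dg_nonneg y : 0 <= dg y.
Proof.
  pose proof (cW_pos a a_pos). pose proof INR_SN_pos. pose proof (E_pos y). pose proof (W_pos y).
  pose proof (Ka_nonneg a psi y). unfold dg.
  apply Rdiv_le_0_compat; [|lra]. apply Rmult_le_pos; [|lra].
  apply Rmult_le_pos; [apply Rdiv_le_0_compat|]; lra.
Qed.

Lemma g_nondecreasing x y : 0 < x -> x <= y -> y < 2 -> g x <= g y.
Proof.
  intros Hx [Hxy|<-] Hy; [|lra].
  apply (nondecreasing_of_deriv g dg); auto.
  - intros; apply g_continuous.
  - intros t Ht. apply g_deriv. rewrite Rabs_right; lra.
  - intros; apply dg_nonneg.
Qed.

Lemma key_identity y :
  INR N * g y ^ m * dg y = INR N * lam ^ N * rho y ^ m * Qa a y * (2 * a * G y).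
Proof.
  rewrite G_inv. unfold dg, g, rho, Ka, cW. rewrite <- (E_pow y).
  rewrite !Rpow_mult_distr, exp_pow_INR.
  pose proof (E_pos y). pose proof INR_SN_pos.
  simpl pow. field. repeat split; try lra. apply pow_nonzero; lra.
Qed.

(* Comparison of g with multiples of rho: by the key identity,
   (g^N - (C rho)^N)' = N rho^(N-1) rho' (lam^N Q - C^N). *)
Lemma g_rho_power_deriv C t : 0 < t < 2 ->
  is_derive (fun s => g s ^ N - (C * rho s) ^ N) t
    (INR N * rho t ^ m * (2 * a * G t) * (lam ^ N * Qa a t - C ^ N)).
Proof.
  intros Ht. eapply is_derive_eq.
  - apply is_derive_Rminus; [apply is_derive_pow, g_deriv; rewrite Rabs_right; lra|].
    apply is_derive_pow, is_derive_scal, rho_deriv.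
  - cbv beta. simpl pred.
    replace (INR N * dg t * g t ^ m) with (INR N * g t ^ m * dg t) by ring.
    rewrite key_identity, Rpow_mult_distr. change (C ^ N) with (C * C ^ m). ring.
Qed.

Lemma rho_le_g C eta : 0 <= C -> 0 < eta < 2 ->
  (forall t, 0 < t < eta -> C ^ N <= lam ^ N * Qa a t) -> C * rho eta <= g eta.
Proof.
  intros HC Heta Hq.
  set (K := fun s => g s ^ N - (C * rho s) ^ N).
  assert (Hmono : K 0 <= K eta).
  { apply (nondecreasing_of_deriv K
             (fun t => INR N * rho t ^ m * (2 * a * G t) * (lam ^ N * Qa a t - C ^ N)) 0 eta);
      [lra| | |].
    - intros t _. apply continuity_pt_minus;
        apply (continuity_pt_comp _ (fun x => x ^ N)); try apply pow_continuous;
        [apply g_continuous | apply continuity_pt_scal, rho_continuous].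
    - intros t Ht. apply g_rho_power_deriv. lra.
    - intros t Ht. pose proof (Hq t Ht). pose proof (rho_nonneg t ltac:(lra)).
      pose proof (G_pos t). pose proof (pos_INR N).
      apply Rmult_le_pos; [|lra]. apply Rmult_le_pos; [apply Rmult_le_pos; auto; apply pow_le|]; nra. }
  unfold K in Hmono. rewrite g_0, rho_0, Rmult_0_r in Hmono.
  assert (Hp : (C * rho eta) ^ N <= g eta ^ N) by (simpl in Hmono |- *; lra).
  apply (pow_le_inv _ _ m); [apply Rmult_le_pos; [|apply rho_nonneg]; lra | left; apply g_pos; lra | exact Hp].
Qed.

Lemma g_le_rho C eta : 0 <= C -> 0 < eta < 2 ->
  (forall t, 0 < t < eta -> lam ^ N * Qa a t <= C ^ N) -> g eta <= C * rho eta.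
Proof.
  intros HC Heta Hq.
  set (K := fun s => - (g s ^ N - (C * rho s) ^ N)).
  assert (Hmono : K 0 <= K eta).
  { apply (nondecreasing_of_deriv K
             (fun t => - (INR N * rho t ^ m * (2 * a * G t) * (lam ^ N * Qa a t - C ^ N))) 0 eta);
      [lra| | |].
    - intros t _. apply continuity_pt_opp, continuity_pt_minus;
        apply (continuity_pt_comp _ (fun x => x ^ N)); try apply pow_continuous;
        [apply g_continuous | apply continuity_pt_scal, rho_continuous].
    - intros t Ht. apply (is_derive_opp (fun s => g s ^ N - (C * rho s) ^ N)), g_rho_power_deriv. lra.
    - intros t Ht. pose proof (Hq t Ht). pose proof (rho_nonneg t ltac:(lra)).
      pose proof (G_pos t). pose proof (pos_INR N).
      assert (0 <= INR N * rho t ^ m * (2 * a * G t))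
        by (apply Rmult_le_pos; [apply Rmult_le_pos; auto; apply pow_le|]; nra).
      nra. }
  unfold K in Hmono. rewrite g_0, rho_0, Rmult_0_r in Hmono.
  assert (Hp : g eta ^ N <= (C * rho eta) ^ N) by (simpl in Hmono |- *; lra).
  apply (pow_le_inv _ _ m); [left; apply g_pos; lra | apply Rmult_le_pos; [|apply rho_nonneg]; lra | exact Hp].
Qed.

(* Since g is nondecreasing and g G = id, (rho(1) - rho(eta)) g(eta) <= a (1 - eta^2). *)
Lemma rho_gap_bound eta : 0 < eta < 1 -> (rho 1 - rho eta) * g eta <= a * (1 - eta ^ 2).
Proof.
  intros Heta.
  set (K := fun t => a * t ^ 2 - rho t * g eta).
  assert (Km : K eta <= K 1).
  { apply (nondecreasing_of_deriv K (fun t => a * (2 * t) - 2 * a * G t * g eta)); [lra| | |].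
    - intros t _. apply continuity_pt_minus;
        [apply continuity_pt_scal, pow_continuous
        | apply continuity_pt_mult; [apply rho_continuous | apply continuity_pt_const; intros u v; auto]].
    - intros t Ht. eapply is_derive_eq.
      + apply is_derive_Rminus; [apply is_derive_scal, is_derive_pow, is_derive_id|].
        apply is_derive_Rmult; [apply rho_deriv | apply is_derive_const].
      + cbv beta. change one with 1. change zero with 0. simpl. ring.
    - intros t Ht. assert (g eta <= g t) by (apply g_nondecreasing; lra).
      pose proof (g_G t). pose proof (G_pos t).
      assert (G t * g eta <= G t * g t) by (apply Rmult_le_compat_l; lra). nra. }
  unfold K in Km. simpl in Km |- *. nra.
Qed.

Lemma rho_1_lt_1 : (forall x, 0 < x <= a -> (8 / lam) ^ N * x ^ N <= q x) -> rho 1 < 1.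
Proof.
  intros Hsmall. set (L := rho 1). assert (HL : 0 < L) by (apply rho_pos; lra).
  destruct (f_interv_is_interv rho 0 1 (L / 2)) as [eta [Heta1 Heta2]];
    [lra | rewrite rho_0; fold L; lra | intros; apply rho_continuous |].
  assert (Heta0 : eta <> 0) by (intro E0; rewrite E0, rho_0 in Heta2; lra).
  assert (Heta3 : eta <> 1) by (intro E0; rewrite E0 in Heta2; fold L in Heta2; lra).
  set (X := a * (1 - eta ^ 2)).
  assert (HX : 0 < X) by (unfold X; apply Rmult_lt_0_compat; nra).
  (* q is large on the range of v over (0, eta): g(eta) >= 8 X rho(eta) *)
  assert (Hlow : 8 * X * rho eta <= g eta).
  { apply rho_le_g; [lra | lra |]. intros t Ht.
    assert (Ht2 : t ^ 2 <= eta ^ 2) by (simpl; nra).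
    assert (eta ^ 2 < 1) by (simpl; nra).
    assert (Hxt : 0 < a * (1 - t ^ 2)) by (apply Rmult_lt_0_compat; lra).
    assert (HXt : X <= a * (1 - t ^ 2)) by (unfold X; apply Rmult_le_compat_l; lra).
    rewrite Qa_eq by auto.
    specialize (Hsmall (a * (1 - t ^ 2)) ltac:(split; nra)).
    rewrite Rpow_mult_distr.
    assert (X ^ N <= (a * (1 - t ^ 2)) ^ N) by (apply pow_incr; lra).
    assert (lam ^ N * (8 / lam) ^ N = 8 ^ N) by (rewrite <- Rpow_mult_distr; f_equal; field; lra).
    assert (0 < lam ^ N) by (apply pow_lt; lra). assert (0 < 8 ^ N) by (apply pow_lt; lra).
    assert (8 ^ N * X ^ N <= 8 ^ N * (a * (1 - t ^ 2)) ^ N) by (apply Rmult_le_compat_l; lra).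
    assert (lam ^ N * ((8 / lam) ^ N * (a * (1 - t ^ 2)) ^ N) <= lam ^ N * q (a * (1 - t ^ 2)))
      by (apply Rmult_le_compat_l; lra).
    nra. }
  pose proof (rho_gap_bound eta ltac:(lra)) as Hgap. fold L X in Hgap. rewrite Heta2 in Hlow, Hgap.
  assert ((L - L / 2) * (8 * X * (L / 2)) <= X)
    by (eapply Rle_trans; [|exact Hgap]; apply Rmult_le_compat_l; lra).
  assert (L * L <= 1 / 2) by nra.
  nra.
Qed.

(* If g <= (a/4) rho on (0,1/2], then rho' = 2a G = 2a t / g >= 8 t / rho there,
   i.e. (rho^2 - 8 t^2)' >= 0, so rho(1/2)^2 >= 2. *)
Lemma rho_half_lower_bound :
  (forall t, 0 < t <= 1/2 -> g t <= a / 4 * rho t) -> 2 <= rho (1/2) ^ 2.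
Proof.
  intros Hup. set (K := fun t => rho t ^ 2 - 8 * t ^ 2).
  assert (Km : K 0 <= K (1/2)).
  { apply (nondecreasing_of_deriv K (fun t => 2 * (2 * a * G t) * rho t - 8 * (2 * t)));
      [lra| | |].
    - intros t _. apply continuity_pt_minus; [|apply continuity_pt_scal, pow_continuous].
      apply (continuity_pt_comp rho (fun x => x ^ 2)); [apply rho_continuous | apply pow_continuous].
    - intros t Ht. eapply is_derive_eq.
      + apply is_derive_Rminus; [apply is_derive_pow, rho_deriv|].
        apply is_derive_scal, is_derive_pow, is_derive_id.
      + cbv beta. change one with 1. change zero with 0. simpl. ring.
    - intros t Ht. pose proof (Hup t ltac:(lra)). pose proof (g_G t). pose proof (G_pos t).
      assert (g t * G t <= a / 4 * rho t * G t) by (apply Rmult_le_compat_r; lra). nra. }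
  unfold K in Km. rewrite rho_0 in Km. simpl in Km |- *. lra.
Qed.

Lemma rho_1_gt_1 :
  (forall x, 3 * a / 4 <= x <= a -> q x <= (1 / (4 * lam)) ^ N * x ^ N) -> 1 < rho 1.
Proof.
  intros Hlarge.
  (* q is small on the range of v over (0, 1/2): g <= (a/4) rho there *)
  assert (Hup : forall eta, 0 < eta <= 1/2 -> g eta <= a / 4 * rho eta).
  { intros eta Heta. apply g_le_rho; [lra | lra |]. intros t Ht.
    assert (Ht2 : 0 <= t ^ 2 <= 1/4) by (simpl; split; nra).
    assert (Hxt : 3 * a / 4 <= a * (1 - t ^ 2) <= a) by (split; nra).
    rewrite Qa_eq by lra. specialize (Hlarge _ Hxt).
    assert ((a * (1 - t ^ 2)) ^ N <= a ^ N) by (apply pow_incr; lra).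
    assert (0 < lam ^ N) by (apply pow_lt; lra).
    assert (0 < (1 / (4 * lam)) ^ N) by (apply pow_lt, Rdiv_lt_0_compat; lra).
    assert (lam ^ N * ((1 / (4 * lam)) ^ N * a ^ N) = (a / 4) ^ N)
      by (rewrite <- !Rpow_mult_distr; f_equal; field; lra).
    assert (lam ^ N * q (a * (1 - t ^ 2)) <= lam ^ N * ((1 / (4 * lam)) ^ N * (a * (1 - t ^ 2)) ^ N))
      by (apply Rmult_le_compat_l; lra).
    assert ((1 / (4 * lam)) ^ N * (a * (1 - t ^ 2)) ^ N <= (1 / (4 * lam)) ^ N * a ^ N)
      by (apply Rmult_le_compat_l; lra).
    nra. }
  pose proof (rho_half_lower_bound Hup) as Hsq.
  assert (0 < rho (1/2)) by (apply rho_pos; lra).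
  assert (rho (1/2) < rho 1) by (apply rho_incr; lra).
  simpl in Hsq. nra.
Qed.

Definition einv (r : R) : R := epsilon (inhabits 0) (fun e => -2 <= e <= 2 /\ rho e = r).

Lemma einv_spec r : rho (-2) <= r <= rho 2 -> -2 <= einv r <= 2 /\ rho (einv r) = r.
Proof.
  intros Hr. unfold einv. apply epsilon_spec.
  destruct (f_interv_is_interv rho (-2) 2 r) as [e [He1 He2]];
    [lra | lra | intros; apply rho_continuous | exists e; auto].
Qed.

Lemma einv_rho x : -2 <= x <= 2 -> einv (rho x) = x.
Proof.
  intros Hx. destruct (einv_spec (rho x)) as [H1 H2]; [split; apply rho_le; lra|].
  destruct (Rtotal_order (einv (rho x)) x) as [Hl|[Hl|Hl]]; auto;
    apply rho_incr in Hl; lra.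
Qed.

Lemma einv_continuous r : rho (-2) < r < rho 2 -> continuity_pt einv r.
Proof.
  intros Hr. apply (continuity_pt_recip_interv rho einv (-2) 2); [lra | | | | | lra].
  - intros x y _ Hxy _. apply rho_incr; auto.
  - intros x H1 H2. unfold comp, id. apply einv_spec; lra.
  - intros x H1 H2. apply einv_spec; lra.
  - intros; apply rho_continuous.
Qed.

Lemma einv_deriv r : rho (-2) < r < rho 2 -> is_derive einv r (1 / (2 * a * G (einv r))).
Proof.
  intros Hr.
  assert (E1 : einv (rho (-2)) = -2) by (apply einv_rho; lra).
  assert (E2 : einv (rho 2) = 2) by (apply einv_rho; lra).
  set (Prf := fun (x : R) (_ : einv (rho (-2)) <= x <= einv (rho 2)) =>
     exist (fun l => derivable_pt_lim rho x l) (2 * a * G x)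
       (proj1 (is_derive_Reals _ _ _) (rho_deriv x))).
  assert (Pinc : einv (rho (-2)) <= einv r <= einv (rho 2))
    by (rewrite E1, E2; apply einv_spec; lra).
  apply is_derive_Reals.
  apply (derivable_pt_lim_recip_interv rho einv (rho (-2)) (rho 2) r Prf
           (einv_continuous r Hr) ltac:(lra) Hr Pinc).
  - intros x Hx. unfold comp, id. apply einv_spec; lra.
  - simpl. pose proof (G_pos (einv r)). nra.
Qed.

Lemma rho_neg_2 : rho (-2) < 0.
Proof. rewrite <- rho_0. apply rho_incr; lra. Qed.

Lemma einv_0 : einv 0 = 0.
Proof. rewrite <- rho_0 at 1. apply einv_rho; lra. Qed.

Lemma einv_nonzero r : rho (-2) < r < rho 2 -> r <> 0 -> 0 < Rabs (einv r) < 2.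
Proof.
  intros Hr Hr0. destruct (einv_spec r ltac:(lra)) as [H1 H2].
  assert (einv r <> 0) by (intro E0; rewrite E0, rho_0 in H2; lra).
  assert (einv r <> 2) by (intro E0; rewrite E0 in H2; lra).
  assert (einv r <> -2) by (intro E0; rewrite E0 in H2; lra).
  split; [apply Rabs_pos_lt; auto | apply Rabs_def1; lra].
Qed.

Definition v (r : R) : R := a * (1 - einv r ^ 2).
Definition v1 (r : R) : R := - g (einv r).
Definition v2 (r : R) : R := - (dg (einv r) / (2 * a * G (einv r))).

Lemma dg_continuous y : continuity_pt dg y.
Proof.
  apply continuity_pt_div; [| apply W_continuous | apply Rgt_not_eq, W_pos].
  apply continuity_pt_mult; [apply continuity_pt_mult|].
  - apply continuity_pt_const; intros u u'; auto.
  - apply E_continuous.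
  - apply Ka_continuous, psi_contf.
Qed.

Lemma v1_continuous r : rho (-2) < r < rho 2 -> continuity_pt v1 r.
Proof.
  intros Hr. apply continuity_pt_opp, (continuity_pt_comp einv g);
    [apply einv_continuous; auto | apply g_continuous].
Qed.

Lemma v2_continuous r : rho (-2) < r < rho 2 -> continuity_pt v2 r.
Proof.
  intros Hr. apply continuity_pt_opp.
  apply (continuity_pt_comp einv (fun e => dg e / (2 * a * G e))); [apply einv_continuous; auto|].
  apply continuity_pt_div; [apply dg_continuous | apply continuity_pt_scal, G_continuous|].
  pose proof (G_pos (einv r)). nra.
Qed.

Lemma v_deriv r : rho (-2) < r < rho 2 -> is_derive v r (v1 r).
Proof.
  intros Hr. unfold v, v1, g. eapply is_derive_eq.
  - apply is_derive_scal, is_derive_Rminus; [apply is_derive_const|].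
    apply is_derive_pow, einv_deriv; auto.
  - pose proof (E_G (einv r)). pose proof (G_pos (einv r)).
    replace (E (einv r)) with (/ G (einv r))
      by (apply Rmult_eq_reg_r with (G (einv r)); [rewrite Rinv_l; lra | lra]).
    change zero with 0. simpl. field. lra.
Qed.

Lemma v1_deriv_nonzero r : rho (-2) < r < rho 2 -> r <> 0 -> is_derive v1 r (v2 r).
Proof.
  intros Hr Hr0. unfold v1, v2. eapply is_derive_eq.
  - apply (is_derive_opp (fun r => g (einv r))), (is_derive_comp g einv);
      [apply g_deriv, einv_nonzero; auto | apply einv_deriv; auto].
  - change (scal ?x ?y) with (x * y). change (opp ?x) with (- x).
    pose proof (G_pos (einv r)). field. lra.
Qed.

(* at r = 0, where einv vanishes, v1' exists by continuity of v2 *)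
Lemma v1_deriv r : rho (-2) < r < rho 2 -> is_derive v1 r (v2 r).
Proof.
  intros Hr. destruct (Req_dec r 0) as [->|Hr0]; [|apply v1_deriv_nonzero; auto].
  apply (is_derive_from_punctured _ _ 0 (Rmin (- rho (-2)) (rho 2)));
    [apply Rmin_pos; lra | apply v1_continuous; auto | | apply v2_continuous; auto].
  intros x Hx. rewrite Rminus_0_r in Hx.
  assert (Hx1 : Rabs x < - rho (-2)) by (eapply Rlt_le_trans; [apply Hx| apply Rmin_l]).
  assert (Hx2 : Rabs x < rho 2) by (eapply Rlt_le_trans; [apply Hx| apply Rmin_r]).
  apply Rabs_def2 in Hx1. apply Rabs_def2 in Hx2.
  apply v1_deriv_nonzero; [lra|]. intro E0; rewrite E0, Rabs_R0 in Hx; lra.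
Qed.

Lemma v_equation r : rho (-2) < r < rho 2 -> r <> 0 -> 0 < einv r < 1 ->
  is_derive (fun s => (- v1 s) ^ N) r (lam ^ N * INR N * r ^ m * q (v r)).
Proof.
  intros Hr Hr0 He. destruct (einv_spec r ltac:(lra)) as [_ Erho].
  assert (Hv : 0 < v r) by (unfold v; apply Rmult_lt_0_compat; nra).
  eapply is_derive_eq.
  - apply is_derive_pow, (is_derive_opp v1), v1_deriv_nonzero; auto.
  - unfold v1, v2. simpl pred. change (opp ?x) with (- x).
    rewrite !Ropp_involutive.
    pose proof (key_identity (einv r)) as KI. rewrite Erho, Qa_eq in KI by auto.
    pose proof (G_pos (einv r)).
    apply Rmult_eq_reg_r with (2 * a * G (einv r)); [|nra].
    replace (INR N * (dg (einv r) / (2 * a * G (einv r))) * g (einv r) ^ m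
               * (2 * a * G (einv r))) with (INR N * g (einv r) ^ m * dg (einv r)) by (field; nra).
    rewrite KI. unfold v. ring.
Qed.

Lemma v2_neg r : 0 < einv r < 1 -> v2 r < 0.
Proof.
  intros He. unfold v2.
  assert (Hpos : 0 < dg (einv r)).
  { unfold dg, Ka. rewrite Qa_eq by (apply Rmult_lt_0_compat; nra).
    pose proof (q_pos (a * (1 - einv r ^ 2)) ltac:(apply Rmult_lt_0_compat; nra)).
    pose proof (cW_pos a a_pos). pose proof INR_SN_pos.
    pose proof (E_pos (einv r)). pose proof (W_pos (einv r)).
    pose proof (exp_pos (INR m * psi (einv r))).
    apply Rdiv_lt_0_compat; [|lra]. apply Rmult_lt_0_compat; [|apply Rmult_lt_0_compat; lra].
    apply Rmult_lt_0_compat; [apply Rdiv_lt_0_compat|]; lra. }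
  pose proof (G_pos (einv r)).
  assert (0 < dg (einv r) / (2 * a * G (einv r))) by (apply Rdiv_lt_0_compat; nra).
  lra.
Qed.

Section Normalised.
Hypothesis rho_1 : rho 1 = 1.

Lemma interval_01_in_range r : 0 <= r <= 1 -> rho (-2) < r < rho 2.
Proof.
  intros Hr. pose proof rho_neg_2. assert (rho 1 < rho 2) by (apply rho_incr; lra). lra.
Qed.

Lemma einv_01 r : 0 < r < 1 -> 0 < einv r < 1.
Proof.
  intros Hr. destruct (einv_spec r) as [E1 E2]; [pose proof (interval_01_in_range r); lra|].
  split; apply Rnot_le_lt; intros Hle; apply rho_le in Hle; rewrite ?rho_0, ?rho_1 in Hle; lra.
Qed.

Lemma v_C2 : C2_on01 v v1 v2.
Proof.
  split; [|split].
  - intros r Hr. apply is_derive_Reals, v_deriv, interval_01_in_range; auto.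
  - intros r Hr. apply is_derive_Reals, v1_deriv, interval_01_in_range; auto.
  - intros r Hr eps Heps.
    destruct (proj1 (continuity_pt_eps v2 r) (v2_continuous r (interval_01_in_range r Hr)) eps Heps)
      as [d [Hd Hx]].
    exists d; split; auto.
Qed.

Lemma v1_at_0 : v1 0 = 0.
Proof. unfold v1. rewrite einv_0, g_0. ring. Qed.

Lemma v_at_1 : v 1 = 0.
Proof.
  assert (H : einv (rho 1) = 1) by (apply einv_rho; lra).
  rewrite rho_1 in H. unfold v. rewrite H. ring.
Qed.

End Normalised.
End Profile.

(* Shooting: a |-> psi_a(1) = ln rho_a(1) is continuous, negative for small a
   (growth of q at 0) and positive for large a (decay of q(x)/x^N at infinity). *)
Lemma shooting :
  (exists d, 0 < d /\ forall x, 0 < x < d -> (8 / lam) ^ N * x ^ N <= q x) ->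
  (exists K, forall x, K < x -> q x <= (1 / (4 * lam)) ^ N * x ^ N) ->
  exists a, 0 < a /\ rho a 1 = 1.
Proof.
  intros [d [Hd Hsmall]] [K Hlarge].
  set (a1 := d / 2). set (a2 := 2 * (Rabs K + a1) + 1).
  assert (Ha1 : 0 < a1) by (unfold a1; lra).
  pose proof (Rle_abs K). pose proof (Rabs_pos K).
  assert (Ha2 : a1 < a2) by (unfold a2; lra).
  assert (Hrho : forall a, rho a 1 = exp (psiA a 1)) by (intros; unfold rho; ring).
  assert (F1 : psiA a1 1 < 0).
  { assert (Hr : rho a1 1 < 1) by (apply rho_1_lt_1; auto; intros x Hx; apply Hsmall; unfold a1 in *; lra).
    rewrite Hrho in Hr. apply Rnot_le_lt. intros Hle. apply exp_le_exp in Hle. rewrite exp_0 in Hle. lra. }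
  assert (F2 : 0 < psiA a2 1).
  { assert (Hr : 1 < rho a2 1) by (apply rho_1_gt_1; [lra|]; intros x Hx; apply Hlarge; unfold a2 in *; lra).
    rewrite Hrho in Hr. apply Rnot_le_lt. intros Hle. apply exp_le_exp in Hle. rewrite exp_0 in Hle. lra. }
  destruct (IVT_interv (fun a => psiA a 1) a1 a2) as [a [Ha Hz]]; auto.
  - intros b Hb. apply psiA_continuous_in_a. lra.
  - exists a. split; [lra|]. rewrite Hrho, Hz, exp_0. reflexivity.
Qed.

Lemma positive_profile :
  (exists d, 0 < d /\ forall x, 0 < x < d -> (8 / lam) ^ N * x ^ N <= q x) ->
  (exists K, forall x, K < x -> q x <= (1 / (4 * lam)) ^ N * x ^ N) ->
  exists v v1 v2, C2_on01 v v1 v2 /\ v1 0 = 0 /\ v 1 = 0 /\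
    (forall r, 0 < r < 1 ->
       derivable_pt_lim (fun s => (- v1 s) ^ N) r (lam ^ N * INR N * r ^ m * q (v r))) /\
    (forall r, 0 < r < 1 -> 0 < v r) /\ strictly_concave_01 v.
Proof.
  intros Hsmall Hlarge. destruct (shooting Hsmall Hlarge) as [a [Ha H1]].
  exists (v a), (v1 a), (v2 a).
  assert (HC := v_C2 a Ha H1).
  repeat split; try apply HC.
  - apply v1_at_0; auto.
  - apply v_at_1; auto.
  - intros r Hr. apply is_derive_Reals, v_equation; auto; [|lra | apply einv_01; auto].
    apply interval_01_in_range; auto; lra.
  - intros r Hr. pose proof (einv_01 a Ha H1 r Hr). unfold v. apply Rmult_lt_0_compat; nra.
  - apply (strictly_concave_of_C2 _ _ _ HC). intros r Hr. apply v2_neg, einv_01; auto.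
Qed.

End Construction.

(* From f to the nonlinearities of the two profiles: for u > 0 one takes
   q(x) = (-1)^N f(-x), for u < 0 one takes q = f.  In both cases
   q(x) = (f(s) / s^N) x^N with s = sgn x, |sgn| = 1. *)
Lemma growth_at_0 N f (q : R -> R) sgn : Rabs sgn = 1 -> f0_infinite N f ->
  (forall x, 0 < x -> q x = f (sgn * x) / (sgn * x) ^ N * x ^ N) ->
  forall C, exists d, 0 < d /\ forall x, 0 < x < d -> C * x ^ N <= q x.
Proof.
  intros Hs H0 Hq C. destruct (H0 C) as [d [Hd Hd2]]. exists d. split; auto. intros x Hx.
  assert (Habs : Rabs (sgn * x) = x) by (rewrite Rabs_mult, Hs, Rabs_right; lra).
  assert (sgn * x <> 0) by (intro E0; rewrite E0, Rabs_R0 in Habs; lra).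
  specialize (Hd2 (sgn * x) ltac:(auto) ltac:(lra)).
  rewrite Hq by lra. apply Rmult_le_compat_r; [apply pow_le|]; lra.
Qed.

Lemma decay_at_infinity N f (q : R -> R) sgn : Rabs sgn = 1 -> finf_zero N f ->
  (forall x, 0 < x -> q x = f (sgn * x) / (sgn * x) ^ N * x ^ N) ->
  forall eps, 0 < eps -> exists K, forall x, K < x -> q x <= eps * x ^ N.
Proof.
  intros Hs Hinf Hq eps Heps. destruct (Hinf eps Heps) as [K HK].
  exists (Rabs K). intros x Hx. pose proof (Rle_abs K). pose proof (Rabs_pos K).
  assert (Habs : Rabs (sgn * x) = x) by (rewrite Rabs_mult, Hs, Rabs_right; lra).
  specialize (HK (sgn * x) ltac:(lra)). apply Rabs_def2 in HK.
  rewrite Hq by lra. apply Rmult_le_compat_r; [apply pow_le|]; lra.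
Qed.

Lemma neg1_pow_sq N : (-1) ^ N * (-1) ^ N = 1.
Proof. rewrite <- Rpow_mult_distr. replace (-1 * -1) with 1 by ring. apply pow1. Qed.

Lemma reflected_nonlinearity N f x : 0 < x ->
  (-1) ^ N * f (- x) = f (-1 * x) / (-1 * x) ^ N * x ^ N.
Proof.
  intros Hx. rewrite Rpow_mult_distr. replace (-1 * x) with (- x) by ring.
  pose proof (neg1_pow_sq N) as Hsq. assert ((-1) ^ N <> 0) by (apply pow_nonzero; lra).
  assert (x ^ N <> 0) by (apply pow_nonzero; lra).
  assert (Hinv : / (-1) ^ N = (-1) ^ N).
  { apply Rmult_eq_reg_l with ((-1) ^ N); auto. rewrite Rinv_r, Hsq; auto. }
  unfold Rdiv. rewrite Rinv_mult, Hinv. field. auto.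
Qed.

Lemma profile_for_sign m f lam (q : R -> R) sgn : 0 < lam ->
  cond_f1 (S m) f -> f0_infinite (S m) f -> finf_zero (S m) f -> Rabs sgn = 1 ->
  (forall x, continuity_pt q x) ->
  (forall x, 0 < x -> q x = f (sgn * x) / (sgn * x) ^ S m * x ^ S m) ->
  exists v v1 v2, C2_on01 v v1 v2 /\ v1 0 = 0 /\ v 1 = 0 /\
    (forall r, 0 < r < 1 ->
       derivable_pt_lim (fun s => (- v1 s) ^ S m) r (lam ^ S m * INR (S m) * r ^ m * q (v r))) /\
    (forall r, 0 < r < 1 -> 0 < v r) /\ strictly_concave_01 v.
Proof.
  intros Hl [_ Hfs] H0 Hinf Hs Hqc Hq. apply positive_profile; auto.
  - intros x Hx. rewrite Hq by auto. apply Rmult_lt_0_compat; [|apply pow_lt; auto].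
    assert (Hne : sgn * x <> 0) by (intro E0; apply (f_equal Rabs) in E0;
      rewrite Rabs_mult, Hs, Rabs_R0, Rabs_right in E0; lra).
    pose proof (Hfs (sgn * x) Hne). assert ((sgn * x) ^ S m <> 0) by (apply pow_nonzero; auto).
    replace (f (sgn * x) / (sgn * x) ^ S m)
      with (f (sgn * x) * (sgn * x) ^ S m / ((sgn * x) ^ S m) ^ 2) by (field; auto).
    apply Rdiv_lt_0_compat; [lra | apply pow2_gt_0; auto].
  - apply (growth_at_0 _ f q sgn); auto.
  - apply (decay_at_infinity _ f q sgn); auto. apply pow_lt, Rdiv_lt_0_compat; lra.
Qed.

Lemma solves_MO_positive m f lam v v1 v2 : C2_on01 v v1 v2 -> v1 0 = 0 -> v 1 = 0 ->
  (forall r, 0 < r < 1 -> derivable_pt_lim (fun s => (- v1 s) ^ S m) r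
       (lam ^ S m * INR (S m) * r ^ m * ((-1) ^ S m * f (- v r)))) ->
  solves_MO (S m) f lam v.
Proof.
  intros HC H0 H1 Heq. exists v1, v2. repeat split; auto; try apply HC.
  intros r Hr. replace (S m - 1)%nat with m by lia.
  apply is_derive_Reals. apply (is_derive_ext (fun s => (-1) ^ S m * (- v1 s) ^ S m)).
  { intros s. rewrite <- Rpow_mult_distr. f_equal. ring. }
  eapply is_derive_eq; [apply is_derive_scal, is_derive_Reals, Heq; auto|].
  transitivity (((-1) ^ S m * (-1) ^ S m) * (lam ^ S m * INR (S m) * r ^ m * f (- v r))); [ring|].
  rewrite neg1_pow_sq. ring.
Qed.

Lemma solves_MO_negative m f lam w w1 w2 : C2_on01 w w1 w2 -> w1 0 = 0 -> w 1 = 0 ->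
  (forall r, 0 < r < 1 -> derivable_pt_lim (fun s => (- w1 s) ^ S m) r
       (lam ^ S m * INR (S m) * r ^ m * f (w r))) ->
  solves_MO (S m) f lam (fun r => - w r).
Proof.
  intros [C1 [C2 C3]] H0 H1 Heq. exists (fun r => - w1 r), (fun r => - w2 r).
  repeat split.
  - intros r Hr. apply derivable_pt_lim_opp. auto.
  - intros r Hr. apply derivable_pt_lim_opp. auto.
  - intros r Hr eps He. destruct (C3 r Hr eps He) as [d [Hd Hx]]. exists d; split; auto.
    intros s Hs Hs2. replace (- w2 s - - w2 r) with (- (w2 s - w2 r)) by ring.
    rewrite Rabs_Ropp. auto.
  - intros r Hr. replace (S m - 1)%nat with m by lia. rewrite Ropp_involutive. apply Heq; auto.
  - rewrite H0. ring.
  - rewrite H1. ring.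
Qed.

Lemma strictly_convex_opp w : strictly_concave_01 w -> strictly_convex_01 (fun r => - w r).
Proof. intros H x y t Hx Hy Hne Ht. pose proof (H x y t Hx Hy Hne Ht). lra. Qed.

Theorem theorem4p7 (N : nat) (f : R -> R) :
  (1 <= N)%nat ->
  cond_f1 N f -> f0_infinite N f -> finf_zero N f ->
  forall lam : R, 0 < lam ->
    exists up um : R -> R,
      solves_MO N f lam up /\ solves_MO N f lam um /\
      (forall r, 0 < r < 1 -> up r > 0) /\ strictly_concave_01 up /\
      (forall r, 0 < r < 1 -> um r < 0) /\ strictly_convex_01 um.
Proof.
  intros HN Hf H0 Hinf lam Hl. destruct N as [|m]; [lia|].
  destruct (profile_for_sign m f lam (fun x => (-1) ^ S m * f (- x)) (-1) Hl Hf H0 Hinf)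
    as (v & v1 & v2 & Cv & Av & Bv & Dv & Ev & Fv).
  { unfold Rabs; destruct Rcase_abs; lra. }
  { intros x. apply continuity_pt_scal, (continuity_pt_comp Ropp f);
      [apply continuity_pt_opp, continuity_pt_id | apply Hf]. }
  { intros x Hx. apply reflected_nonlinearity; auto. }
  destruct (profile_for_sign m f lam f 1 Hl Hf H0 Hinf Rabs_R1 (proj1 Hf))
    as (w & w1 & w2 & Cw & Aw & Bw & Dw & Ew & Fw).
  { intros x Hx. rewrite Rmult_1_l. field. apply pow_nonzero; lra. }
  exists v, (fun r => - w r). repeat split.
  - apply (solves_MO_positive m f lam v v1 v2); auto.
  - apply (solves_MO_negative m f lam w w1 w2); auto.
  - intros r Hr. apply Ev; auto.
  - exact Fv.
  - intros r Hr. pose proof (Ew r Hr). lra.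
  - apply strictly_convex_opp; auto.
Qed.
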